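(* Let $H$ be a separable Hilbert space, $0<p\le1$, and $T$ a positive bounded operator on $H$. The following are equivalent: (a) $T\in S_p$; (b) $\{\langle Te_n,e_n\rangle\}\in\ell^p$ for some orthonormal basis $\{e_n\}$ of $H$; (c) $\{\langle Tf_n,f_n\rangle\}\in\ell^p$ for some frame $\{f_n\}$ of $H$. Furthermore, $$\|T\|_p^p=\inf\sum_{n=1}^\infty\langle Te_n,e_n\rangle^p=\inf\sum_{n=1}^\infty\|f_n\|^{2(1-p)}\langle Tf_n,f_n\rangle^p=\inf\sum_{n=1}^\infty\langle Tf_n,f_n\rangle^p,$$ where the first infimum is over all orthonormal bases, the second over all frames with lower frame bound at least $1$, and the third over all Parseval frames. (Terms with $f_n=0$ are taken to be $0$.)
   Context: A sequence $\{f_n\}$ in $H$ is a frame if there are constants $0<C_1\le C_2$ such that $C_1\|f\|^2\le\sum_n|\langle f,f_n\rangle|^2\le C_2\|f\|^2$ for all $f\in H$. The upper frame bound is the infimum of all admissible $C_2$. The lower frame bound is the supremum of all admissible $C_1$. A Parseval frame is one whose lower and upper frame bounds both equal $1$. For a compact operator $T$, its singular values $\lambda_1\ge\lambda_2\ge\cdots$ are the positive eigenvalues of $(T^*T)^{1/2}$, repeated according to multiplicity. For $0<p<\infty$, $S_p$ is the set of compact $T$ with $\{\lambda_n\}\in\ell^p$, and $\|T\|_p=(\sum_n\lambda_n^p)^{1/p}$. *)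

From Stdlib Require Import Reals Lra Arith.
Open Scope R_scope.

Record C := mkC { Re : R; Im : R }.
Definition C0 : C := mkC 0 0.
Definition C1 : C := mkC 1 0.
Definition RtoC (r : R) : C := mkC r 0.
Definition Cadd (z w : C) : C := mkC (Re z + Re w) (Im z + Im w).
Definition Cmul (z w : C) : C :=
  mkC (Re z * Re w - Im z * Im w) (Re z * Im w + Im z * Re w).
Definition Cconj (z : C) : C := mkC (Re z) (- Im z).
Definition Cnorm2 (z : C) : R := Re z * Re z + Im z * Im z.

Record SepHilbert := {
  hcarrier :> Type;
  hzero : hcarrier;
  hadd : hcarrier -> hcarrier -> hcarrier;
  hopp : hcarrier -> hcarrier;
  hscal : C -> hcarrier -> hcarrier;
  hinner : hcarrier -> hcarrier -> C;
  hadd_assoc : forall x y z, hadd x (hadd y z) = hadd (hadd x y) z;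
  hadd_comm : forall x y, hadd x y = hadd y x;
  hadd_zero : forall x, hadd x hzero = x;
  hadd_opp : forall x, hadd x (hopp x) = hzero;
  hscal_one : forall x, hscal C1 x = x;
  hscal_assoc : forall a b x, hscal a (hscal b x) = hscal (Cmul a b) x;
  hscal_distr_v : forall a x y, hscal a (hadd x y) = hadd (hscal a x) (hscal a y);
  hscal_distr_s : forall a b x, hscal (Cadd a b) x = hadd (hscal a x) (hscal b x);
  hinner_add_l : forall x y z, hinner (hadd x y) z = Cadd (hinner x z) (hinner y z);
  hinner_scal_l : forall a x y, hinner (hscal a x) y = Cmul a (hinner x y);
  hinner_conj : forall x y, hinner y x = Cconj (hinner x y);
  hinner_pos : forall x, Im (hinner x x) = 0 /\ 0 <= Re (hinner x x);
  hinner_def : forall x, Re (hinner x x) = 0 -> x = hzero;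
  hcomplete : forall u : nat -> hcarrier,
    (forall eps, 0 < eps -> exists N, forall m n, (N <= m)%nat -> (N <= n)%nat ->
       sqrt (Re (hinner (hadd (u m) (hopp (u n))) (hadd (u m) (hopp (u n))))) < eps) ->
    exists l, forall eps, 0 < eps -> exists N, forall n, (N <= n)%nat ->
       sqrt (Re (hinner (hadd (u n) (hopp l)) (hadd (u n) (hopp l)))) < eps;
  hseparable : exists d : nat -> hcarrier, forall x eps, 0 < eps -> exists n,
       sqrt (Re (hinner (hadd x (hopp (d n))) (hadd x (hopp (d n))))) < eps
}.

Arguments hzero {s}.
Arguments hadd {s}.
Arguments hopp {s}.
Arguments hscal {s}.
Arguments hinner {s}.

Section Ops.
Context {H : SepHilbert}.

Definition hsub (x y : H) : H := hadd x (hopp y).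
Definition hnorm (x : H) : R := sqrt (Re (hinner x x)).

Definition hconv (u : nat -> H) (l : H) : Prop :=
  forall eps, 0 < eps -> exists N, forall n, (N <= n)%nat -> hnorm (hsub (u n) l) < eps.

Definition orthonormal (e : nat -> H) : Prop :=
  forall i j, hinner (e i) (e j) = if Nat.eqb i j then C1 else C0.

Definition is_ONB (e : nat -> H) : Prop :=
  orthonormal e /\ forall x, (forall n, hinner x (e n) = C0) -> x = hzero.

Definition hlinear (T : H -> H) : Prop :=
  (forall x y, T (hadd x y) = hadd (T x) (T y)) /\
  (forall a x, T (hscal a x) = hscal a (T x)).
Definition hbounded (T : H -> H) : Prop :=
  exists M, forall x, hnorm (T x) <= M * hnorm x.
Definition hpositive (T : H -> H) : Prop :=
  forall x, Im (hinner (T x) x) = 0 /\ 0 <= Re (hinner (T x) x).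
Definition positive_bounded_op (T : H -> H) : Prop :=
  hlinear T /\ hbounded T /\ hpositive T.

Definition hcompact (T : H -> H) : Prop :=
  hlinear T /\ hbounded T /\
  forall u : nat -> H, (exists M, forall n, hnorm (u n) <= M) ->
    exists phi : nat -> nat, (forall n, (phi n < phi (S n))%nat) /\
      exists l, hconv (fun n => T (u (phi n))) l.

(* lam is the sequence of singular values of T (padded with zeros when there
   are only finitely many): the positive eigenvalues of Sq = (T^* T)^{1/2},
   the positive operator with Sq Sq = T^* T, listed nonincreasingly and
   repeated according to multiplicity (= Hilbert dimension of the eigenspace,
   i.e. the maximal size of an orthonormal family of eigenvectors). *)
Definition singular_values (T : H -> H) (lam : nat -> R) : Prop :=
  exists Sq : H -> H, positive_bounded_op Sq /\
    (forall x y, hinner (Sq (Sq x)) y = hinner (T x) (T y)) /\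
    (forall n, 0 <= lam n) /\ (forall n, lam (S n) <= lam n) /\
    forall mu, 0 < mu -> forall k : nat,
      ((exists v : nat -> H,
          (forall i j, (i < k)%nat -> (j < k)%nat ->
             hinner (v i) (v j) = if Nat.eqb i j then C1 else C0) /\
          (forall i, (i < k)%nat -> Sq (v i) = hscal (RtoC mu) (v i)))
       <->
       (exists g : nat -> nat,
          (forall i j, (i < k)%nat -> (j < k)%nat -> g i = g j -> i = j) /\
          (forall i, (i < k)%nat -> lam (g i) = mu))).

(* real power with 0^p = 0 (for p > 0) *)
Definition rpow (x p : R) : R :=
  if Rle_dec x 0 then 0 else Rpower x p.

Definition lp_seq (p : R) (a : nat -> R) : Prop :=
  exists s, infinite_sum (fun n => rpow (Rabs (a n)) p) s.

Definition in_Sp (p : R) (T : H -> H) : Prop :=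
  hcompact T /\ exists lam, singular_values T lam /\ lp_seq p lam.

(* v = ||T||_p^p in [0, +oo] (None = +oo) *)
Definition schatten_pp (p : R) (T : H -> H) (v : option R) : Prop :=
  (in_Sp p T /\ exists lam s, singular_values T lam /\
       infinite_sum (fun n => rpow (lam n) p) s /\ v = Some s)
  \/ (~ in_Sp p T /\ v = None).

Definition frame_sum (f : nat -> H) (x : H) := fun n => Cnorm2 (hinner x (f n)).

Definition is_frame (f : nat -> H) : Prop :=
  exists C1' C2', 0 < C1' <= C2' /\ forall x, exists s,
    infinite_sum (frame_sum f x) s /\
    C1' * (hnorm x)^2 <= s <= C2' * (hnorm x)^2.

Definition adm_lower (f : nat -> H) (c : R) : Prop :=
  0 < c /\ forall x s, infinite_sum (frame_sum f x) s -> c * (hnorm x)^2 <= s.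
Definition adm_upper (f : nat -> H) (c : R) : Prop :=
  0 < c /\ forall x s, infinite_sum (frame_sum f x) s -> s <= c * (hnorm x)^2.

Definition is_glb (A : R -> Prop) (r : R) : Prop :=
  (forall s, A s -> r <= s) /\ (forall r', (forall s, A s -> r' <= s) -> r' <= r).

Definition lower_frame_bound (f : nat -> H) (A : R) : Prop := is_lub (adm_lower f) A.
Definition upper_frame_bound (f : nat -> H) (B : R) : Prop := is_glb (adm_upper f) B.

Definition frame_lower_ge1 (f : nat -> H) : Prop :=
  is_frame f /\ exists A, lower_frame_bound f A /\ 1 <= A.

Definition parseval (f : nat -> H) : Prop :=
  is_frame f /\ lower_frame_bound f 1 /\ upper_frame_bound f 1.

End Ops.

(* infimum in [0,+oo]: None = +oo = inf of the empty set *)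
Definition inf_ext (A : R -> Prop) (v : option R) : Prop :=
  match v with
  | None => forall s, ~ A s
  | Some r => is_glb A r
  end.

Definition weighted_term {H : SepHilbert} (p : R) (T : H -> H) (f : H) : R :=
  if Req_EM_T (hnorm f) 0 then 0
  else Rpower (hnorm f) (2 * (1 - p)) * rpow (Re (hinner (T f) f)) p.

From Pilot Require Import Defs.
From Stdlib Require Import Reals Lra Lia ZArith List Classical ClassicalEpsilon FunctionalExtensionality.
Open Scope R_scope.
(* Import Defs again after Reals, so that the complex numbers [C] shadow the binomial [C] of Reals. *)
Import Defs.

Arguments hadd_assoc {s}. Arguments hadd_comm {s}. Arguments hadd_zero {s}.
Arguments hadd_opp {s}. Arguments hscal_one {s}. Arguments hscal_assoc {s}.
Arguments hscal_distr_v {s}. Arguments hscal_distr_s {s}. Arguments hinner_add_l {s}.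
Arguments hinner_scal_l {s}. Arguments hinner_conj {s}. Arguments hinner_pos {s}.
Arguments hinner_def {s}. Arguments hcomplete s : clear implicits.

Lemma C_ext : forall z w : C, Re z = Re w -> Im z = Im w -> z = w.
Proof. intros [a b] [c d]; simpl; intros -> ->; reflexivity. Qed.

Section VectorAlgebra.
Context {H : SepHilbert}.
Implicit Types x y z : H.

Lemma hadd_0l x : hadd hzero x = x.
Proof. rewrite hadd_comm; apply hadd_zero. Qed.

Lemma hadd_cancel_z a y : hadd a y = a -> y = hzero.
Proof.
  intro E. rewrite <- (hadd_zero y), <- (hadd_opp a), hadd_assoc, (hadd_comm y a), E.
  reflexivity.
Qed.

Lemma hscal_C0 x : hscal C0 x = hzero.
Proof.
  apply (hadd_cancel_z (hscal C0 x)). rewrite <- hscal_distr_s.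
  f_equal. apply C_ext; simpl; ring.
Qed.

Lemma hopp_unique x w : hadd x w = hzero -> w = hopp x.
Proof.
  intro E. rewrite <- (hadd_zero w), <- (hadd_opp x), hadd_assoc, (hadd_comm w x), E.
  apply hadd_0l.
Qed.

Definition Cm1 : C := mkC (-1) 0.

Lemma hopp_scal x : hopp x = hscal Cm1 x.
Proof.
  symmetry; apply hopp_unique.
  rewrite <- (hscal_one x) at 1. rewrite <- hscal_distr_s.
  rewrite <- (hscal_C0 x). f_equal. apply C_ext; simpl; ring.
Qed.

Lemma hscal_zero a : hscal a (@hzero H) = hzero.
Proof. rewrite <- (hscal_C0 hzero), hscal_assoc. f_equal. apply C_ext; simpl; ring. Qed.

Lemma scal_scal_R (a b : R) x : hscal (RtoC a) (hscal (RtoC b) x) = hscal (RtoC (a * b)) x.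
Proof. rewrite hscal_assoc. f_equal. apply C_ext; simpl; ring. Qed.

Lemma Re_addl x y z : Re (hinner (hadd x y) z) = Re (hinner x z) + Re (hinner y z).
Proof. rewrite hinner_add_l; reflexivity. Qed.
Lemma Im_addl x y z : Im (hinner (hadd x y) z) = Im (hinner x z) + Im (hinner y z).
Proof. rewrite hinner_add_l; reflexivity. Qed.
Lemma Re_scall a x y : Re (hinner (hscal a x) y) = Re a * Re (hinner x y) - Im a * Im (hinner x y).
Proof. rewrite hinner_scal_l; reflexivity. Qed.
Lemma Im_scall a x y : Im (hinner (hscal a x) y) = Re a * Im (hinner x y) + Im a * Re (hinner x y).
Proof. rewrite hinner_scal_l; reflexivity. Qed.
Lemma Re_sym x y : Re (hinner y x) = Re (hinner x y).
Proof. rewrite hinner_conj; reflexivity. Qed.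
Lemma Im_sym x y : Im (hinner y x) = - Im (hinner x y).
Proof. rewrite hinner_conj; reflexivity. Qed.
Lemma Re_addr x y z : Re (hinner z (hadd x y)) = Re (hinner z x) + Re (hinner z y).
Proof. rewrite !(Re_sym _ z), Re_addl; reflexivity. Qed.
Lemma Im_addr x y z : Im (hinner z (hadd x y)) = Im (hinner z x) + Im (hinner z y).
Proof. rewrite !(Im_sym _ z), Im_addl; ring. Qed.
Lemma Re_scalr a x y : Re (hinner y (hscal a x)) = Re a * Re (hinner y x) + Im a * Im (hinner y x).
Proof. rewrite (Re_sym _ y), Re_scall, (Re_sym y x), (Im_sym y x); ring. Qed.
Lemma Im_scalr a x y : Im (hinner y (hscal a x)) = Re a * Im (hinner y x) - Im a * Re (hinner y x).
Proof. rewrite (Im_sym _ y), Im_scall, (Re_sym y x), (Im_sym y x); ring. Qed.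
Lemma Re_oppl x y : Re (hinner (hopp x) y) = - Re (hinner x y).
Proof. rewrite hopp_scal, Re_scall; simpl; ring. Qed.
Lemma Im_oppl x y : Im (hinner (hopp x) y) = - Im (hinner x y).
Proof. rewrite hopp_scal, Im_scall; simpl; ring. Qed.
Lemma Re_oppr x y : Re (hinner y (hopp x)) = - Re (hinner y x).
Proof. rewrite hopp_scal, Re_scalr; simpl; ring. Qed.
Lemma Im_oppr x y : Im (hinner y (hopp x)) = - Im (hinner y x).
Proof. rewrite hopp_scal, Im_scalr; simpl; ring. Qed.
Lemma Re_0l y : Re (hinner hzero y) = 0.
Proof. rewrite <- (hscal_C0 y), Re_scall; simpl; ring. Qed.
Lemma Im_0l y : Im (hinner hzero y) = 0.
Proof. rewrite <- (hscal_C0 y), Im_scall; simpl; ring. Qed.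
Lemma Re_0r y : Re (hinner y hzero) = 0.
Proof. rewrite Re_sym; apply Re_0l. Qed.
Lemma Im_0r y : Im (hinner y hzero) = 0.
Proof. rewrite Im_sym, Im_0l; ring. Qed.
Lemma Re_subl x y z : Re (hinner (hsub x y) z) = Re (hinner x z) - Re (hinner y z).
Proof. unfold hsub; rewrite Re_addl, Re_oppl; ring. Qed.
Lemma Im_subl x y z : Im (hinner (hsub x y) z) = Im (hinner x z) - Im (hinner y z).
Proof. unfold hsub; rewrite Im_addl, Im_oppl; ring. Qed.
Lemma Re_subr x y z : Re (hinner z (hsub x y)) = Re (hinner z x) - Re (hinner z y).
Proof. unfold hsub; rewrite Re_addr, Re_oppr; ring. Qed.
Lemma Im_subr x y z : Im (hinner z (hsub x y)) = Im (hinner z x) - Im (hinner z y).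
Proof. unfold hsub; rewrite Im_addr, Im_oppr; ring. Qed.

End VectorAlgebra.

Hint Rewrite @Re_addl @Im_addl @Re_scall @Im_scall @Re_addr @Im_addr @Re_scalr @Im_scalr
  @Re_oppl @Im_oppl @Re_oppr @Im_oppr @Re_0l @Im_0l @Re_0r @Im_0r
  @Re_subl @Im_subl @Re_subr @Im_subr : ipsimp.

Section Norms.
Context {H : SepHilbert}.
Implicit Types x y z : H.

Definition nsq x := Re (hinner x x).

Lemma nsq_nonneg x : 0 <= nsq x.
Proof. apply (hinner_pos x). Qed.
Lemma Im_self x : Im (hinner x x) = 0.
Proof. apply (hinner_pos x). Qed.
Lemma hnorm_nonneg x : 0 <= hnorm x.
Proof. apply sqrt_pos. Qed.
Lemma hnorm_sq x : hnorm x * hnorm x = nsq x.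
Proof. apply sqrt_sqrt, nsq_nonneg. Qed.
Lemma hnorm_sq2 x : (hnorm x)^2 = nsq x.
Proof. rewrite <- hnorm_sq; ring. Qed.
Lemma nsq_zero_iff x : nsq x = 0 -> x = hzero.
Proof. apply hinner_def. Qed.
Lemma nsq_hzero : nsq (@hzero H) = 0.
Proof. unfold nsq; autorewrite with ipsimp; reflexivity. Qed.

Lemma inner0l v : hinner (@hzero H) v = C0.
Proof. apply C_ext; autorewrite with ipsimp; auto. Qed.

Lemma inner0r v : hinner v (@hzero H) = C0.
Proof. apply C_ext; autorewrite with ipsimp; auto. Qed.

Lemma nsq_add x y : nsq (hadd x y) = nsq x + nsq y + 2 * Re (hinner x y).
Proof. unfold nsq; autorewrite with ipsimp; rewrite (Re_sym x y); ring. Qed.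
Lemma nsq_sub x y : nsq (hsub x y) = nsq x + nsq y - 2 * Re (hinner x y).
Proof. unfold nsq; autorewrite with ipsimp; rewrite (Re_sym x y); ring. Qed.
Lemma nsq_scal a x : nsq (hscal a x) = (Re a * Re a + Im a * Im a) * nsq x.
Proof. unfold nsq; autorewrite with ipsimp; rewrite Im_self; ring. Qed.
Lemma nsq_opp x : nsq (hopp x) = nsq x.
Proof. unfold nsq; autorewrite with ipsimp; ring. Qed.

End Norms.

(* A positive semidefinite Hermitian form B; its Cauchy-Schwarz inequality serves both
   the inner product and the forms (x,y) |-> <Tx,y> of positive operators. *)
Section Form.
Context {H : SepHilbert}.
Variable B : H -> H -> C.
Hypothesis Badd : forall x y z, B (hadd x y) z = Cadd (B x z) (B y z).
Hypothesis Bscal : forall a x y, B (hscal a x) y = Cmul a (B x y).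
Hypothesis Bconj : forall x y, B y x = Cconj (B x y).
Hypothesis Bpos : forall x, 0 <= Re (B x x).

Lemma B_Im_self x : Im (B x x) = 0.
Proof. pose proof (f_equal Im (Bconj x x)) as E; simpl in E; lra. Qed.

Lemma BRe_addl x y z : Re (B (hadd x y) z) = Re (B x z) + Re (B y z).
Proof. rewrite Badd; reflexivity. Qed.
Lemma BRe_scall a x y : Re (B (hscal a x) y) = Re a * Re (B x y) - Im a * Im (B x y).
Proof. rewrite Bscal; reflexivity. Qed.
Lemma BIm_scall a x y : Im (B (hscal a x) y) = Re a * Im (B x y) + Im a * Re (B x y).
Proof. rewrite Bscal; reflexivity. Qed.
Lemma BRe_sym x y : Re (B y x) = Re (B x y).
Proof. rewrite Bconj; reflexivity. Qed.
Lemma BIm_sym x y : Im (B y x) = - Im (B x y).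
Proof. rewrite Bconj; reflexivity. Qed.
Lemma BRe_addr x y z : Re (B z (hadd x y)) = Re (B z x) + Re (B z y).
Proof. rewrite !(BRe_sym _ z), BRe_addl; reflexivity. Qed.
Lemma BRe_scalr a x y : Re (B y (hscal a x)) = Re a * Re (B y x) + Im a * Im (B y x).
Proof. rewrite (BRe_sym _ y), BRe_scall, (BRe_sym y x), (BIm_sym y x); ring. Qed.
Lemma BIm_scalr a x y : Im (B y (hscal a x)) = Re a * Im (B y x) - Im a * Re (B y x).
Proof. rewrite (BIm_sym _ y), BIm_scall, (BRe_sym y x), (BIm_sym y x); ring. Qed.

Lemma B_expand x y a :
  Re (B (hadd x (hscal a y)) (hadd x (hscal a y))) =
  Re (B x x) + 2 * (Re a * Re (B y x) - Im a * Im (B y x))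
  + (Re a * Re a + Im a * Im a) * Re (B y y).
Proof.
  rewrite BRe_addl, !BRe_addr, !BRe_scall, !BRe_scalr, !BIm_scalr.
  rewrite (BRe_sym x y), (BIm_sym x y), (B_Im_self y). ring.
Qed.

(* Cauchy-Schwarz for a positive semidefinite Hermitian form:
   |B(x,y)|^2 <= B(x,x) B(y,y), by nonnegativity of B(x + a y, x + a y). *)
Lemma form_CS x y : Cnorm2 (B x y) <= Re (B x x) * Re (B y y).
Proof.
  set (c := B y x).
  assert (Ec : Cnorm2 (B x y) = Re c * Re c + Im c * Im c).
  { unfold c; rewrite (Bconj x y); unfold Cnorm2; simpl; ring. }
  rewrite Ec. pose proof (Bpos x) as Px. pose proof (Bpos y) as Py.
  assert (key : forall t, 0 <= Re (B x x) - 2 * t * (Re c * Re c + Im c * Im c)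
                 + t * t * (Re c * Re c + Im c * Im c) * Re (B y y)).
  { intro t. pose proof (Bpos (hadd x (hscal (mkC (-t * Re c) (t * Im c)) y))) as P.
    rewrite B_expand in P. simpl in P. fold c in P. nra. }
  set (k := Re c * Re c + Im c * Im c) in *.
  assert (k0 : 0 <= k) by (unfold k; nra).
  destruct (Rle_lt_or_eq_dec 0 (Re (B y y)) Py) as [Hy|Hy].
  - pose proof (key (/ Re (B y y))) as K.
    assert (E : / Re (B y y) * / Re (B y y) * k * Re (B y y) = / Re (B y y) * k)
      by (field; lra).
    rewrite E in K.
    assert (0 <= Re (B x x) - / Re (B y y) * k) by lra.
    assert (0 <= Re (B y y) * (Re (B x x) - / Re (B y y) * k)) by (apply Rmult_le_pos; lra).
    assert (E2 : Re (B y y) * (Re (B x x) - / Re (B y y) * k) = Re (B x x) * Re (B y y) - k)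
      by (field; lra).
    lra.
  - rewrite <- Hy in key. rewrite <- Hy.
    destruct (Rle_lt_or_eq_dec 0 k k0) as [Hk|Hk]; [|lra].
    pose proof (key ((Re (B x x) + 1) / k)) as K.
    assert (E : 2 * ((Re (B x x) + 1) / k) * k = 2 * (Re (B x x) + 1)) by (field; lra).
    rewrite Rmult_0_r, Rplus_0_r, E in K. lra.
Qed.

End Form.

Section NormInequalities.
Context {H : SepHilbert}.
Implicit Types x y z : H.

Lemma CS x y : Cnorm2 (hinner x y) <= nsq x * nsq y.
Proof.
  apply (form_CS hinner).
  - apply hinner_add_l. - apply hinner_scal_l. - apply hinner_conj. - apply nsq_nonneg.
Qed.

Lemma le_of_square_le a b : 0 <= b -> a * a <= b * b -> a <= b.
Proof. intros Hb Hab. destruct (Rle_or_lt a b); auto. nra. Qed.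

Lemma Re_CS x y : Rabs (Re (hinner x y)) <= hnorm x * hnorm y.
Proof.
  apply le_of_square_le. apply Rmult_le_pos; apply hnorm_nonneg.
  replace (hnorm x * hnorm y * (hnorm x * hnorm y)) with (nsq x * nsq y)
    by (rewrite <- !hnorm_sq; ring).
  pose proof (CS x y) as Hcs. unfold Cnorm2 in Hcs.
  rewrite <- Rabs_mult, Rabs_right by nra. nra.
Qed.

Lemma Cnorm2_nonneg (w : C) : 0 <= Cnorm2 w.
Proof. unfold Cnorm2; nra. Qed.

Lemma Cnorm2_sym (a b : H) : Cnorm2 (hinner a b) = Cnorm2 (hinner b a).
Proof. rewrite (hinner_conj a b). unfold Cnorm2; simpl; ring. Qed.

Lemma hnorm_triangle x y : hnorm (hadd x y) <= hnorm x + hnorm y.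
Proof.
  apply le_of_square_le. pose proof (hnorm_nonneg x); pose proof (hnorm_nonneg y); lra.
  rewrite hnorm_sq, nsq_add.
  pose proof (Re_CS x y). pose proof (Rle_abs (Re (hinner x y))).
  rewrite <- (hnorm_sq x), <- (hnorm_sq y). nra.
Qed.

Lemma hnorm_opp x : hnorm (hopp x) = hnorm x.
Proof. unfold hnorm; fold (nsq (hopp x)) (nsq x); rewrite nsq_opp; auto. Qed.

Lemma hsub_add x y z : hsub x z = hadd (hsub x y) (hsub y z).
Proof.
  unfold hsub. rewrite <- hadd_assoc. f_equal.
  rewrite hadd_assoc, (hadd_comm (hopp y) y), hadd_opp, hadd_0l. reflexivity.
Qed.

Lemma hnorm_sub_triangle x y z : hnorm (hsub x z) <= hnorm (hsub x y) + hnorm (hsub y z).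
Proof. rewrite (hsub_add x y z); apply hnorm_triangle. Qed.

Lemma hnorm_sub_le x y : hnorm (hsub x y) <= hnorm x + hnorm y.
Proof. unfold hsub. rewrite <- (hnorm_opp y). apply hnorm_triangle. Qed.

Lemma hsub_sym_norm x y : hnorm (hsub x y) = hnorm (hsub y x).
Proof. unfold hnorm; f_equal; fold (nsq (hsub x y)) (nsq (hsub y x)). rewrite !nsq_sub, (Re_sym x y); ring. Qed.

Lemma hsub_diag x : hsub x x = hzero.
Proof. apply hadd_opp. Qed.

End NormInequalities.

Section Extensionality.
Context {H : SepHilbert}.
Implicit Types x y z : H.

Lemma vec_ext x y : (forall z, Re (hinner x z) = Re (hinner y z)) -> x = y.
Proof.
  intro E. specialize (E (hsub x y)).
  assert (N : nsq (hsub x y) = 0).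
  { unfold nsq. rewrite Re_subl. lra. }
  apply nsq_zero_iff in N. unfold hsub in N. symmetry in N.
  rewrite <- (hadd_zero x), <- (hadd_opp y), (hadd_comm y (hopp y)), hadd_assoc, <- N, hadd_0l.
  reflexivity.
Qed.

End Extensionality.

Ltac veq := apply vec_ext; intro; autorewrite with ipsimp; simpl; ring.

Section PositiveOperator.
Context {H : SepHilbert}.
Implicit Types x y z : H.
Variable T : H -> H.
Hypothesis hl : hlinear T.
Hypothesis hp : hpositive T.

Lemma T_add x y : T (hadd x y) = hadd (T x) (T y).
Proof. apply hl. Qed.
Lemma T_scal a x : T (hscal a x) = hscal a (T x).
Proof. apply hl. Qed.
Lemma T_zero : T hzero = hzero.
Proof. rewrite <- (hscal_C0 (@hzero H)) at 1. rewrite T_scal, hscal_C0. reflexivity. Qed.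
Lemma T_opp x : T (hopp x) = hopp (T x).
Proof. rewrite !hopp_scal, T_scal; reflexivity. Qed.
Lemma T_sub x y : T (hsub x y) = hsub (T x) (T y).
Proof. unfold hsub; rewrite T_add, T_opp; reflexivity. Qed.

(* A positive operator on a complex space is self-adjoint: <Ty,x> = conj <Tx,y>
   (polarization with x + y and x + i y). *)
Lemma T_sa x y : hinner (T y) x = Cconj (hinner (T x) y).
Proof.
  destruct (hp (hadd x y)) as [I1 _]. rewrite T_add in I1.
  autorewrite with ipsimp in I1.
  destruct (hp x) as [Ix _]. destruct (hp y) as [Iy _].
  destruct (hp (hadd x (hscal (mkC 0 1) y))) as [I2 _].
  rewrite T_add, T_scal in I2. autorewrite with ipsimp in I2. simpl in I2.
  apply C_ext; simpl; lra.
Qed.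

Lemma T_adj x y : hinner (T x) y = hinner x (T y).
Proof. rewrite (T_sa y x), <- hinner_conj. reflexivity. Qed.

Lemma TRe_adj x y : Re (hinner (T x) y) = Re (hinner x (T y)).
Proof. rewrite T_adj; reflexivity. Qed.

Lemma T_CS x y : Cnorm2 (hinner (T x) y) <= Re (hinner (T x) x) * Re (hinner (T y) y).
Proof.
  apply (form_CS (fun x y => hinner (T x) y)).
  - intros; rewrite T_add; apply hinner_add_l.
  - intros; rewrite T_scal; apply hinner_scal_l.
  - intros; apply T_sa.
  - intros; apply hp.
Qed.

Lemma Cnorm2_self x : Cnorm2 (hinner x x) = nsq x * nsq x.
Proof. unfold Cnorm2, nsq; rewrite Im_self; ring. Qed.

Lemma T_norm4 x : nsq (T x) * nsq (T x) <= Re (hinner (T x) x) * Re (hinner (T (T x)) (T x)).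
Proof.
  pose proof (T_CS x (T x)) as C.
  assert (E : Cnorm2 (hinner (T x) (T x)) = nsq (T x) * nsq (T x)) by apply Cnorm2_self.
  rewrite E in C. exact C.
Qed.

Lemma T_ker x : Re (hinner (T x) x) <= 0 -> T x = hzero.
Proof.
  intro Hx. destruct (hp x) as [_ P]. assert (Z : Re (hinner (T x) x) = 0) by lra.
  pose proof (T_norm4 x) as N. rewrite Z, Rmult_0_l in N.
  apply nsq_zero_iff. pose proof (nsq_nonneg (T x)). nra.
Qed.

Lemma eig_orth u v a b : T u = hscal (RtoC a) u -> T v = hscal (RtoC b) v -> a <> b ->
  hinner u v = C0.
Proof.
  intros Eu Ev Nab. pose proof (T_adj u v) as E. rewrite Eu, Ev in E.
  pose proof (f_equal Re E) as E1. pose proof (f_equal Im E) as E2.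
  autorewrite with ipsimp in E1, E2. simpl in E1, E2.
  apply C_ext; simpl.
  - apply (Rmult_eq_reg_l (a - b)); [|lra]. nra.
  - apply (Rmult_eq_reg_l (a - b)); [|lra]. nra.
Qed.

End PositiveOperator.

Section SquareRoot.
Context {H : SepHilbert}.
Implicit Types x y z : H.

Lemma pos_inj (S : H -> H) (w : H) mu : hpositive S -> 0 < mu ->
  hadd (S w) (hscal (RtoC mu) w) = hzero -> w = hzero.
Proof.
  intros hp Hmu E. pose proof (f_equal (fun v => Re (hinner v w)) E) as E1. simpl in E1.
  autorewrite with ipsimp in E1. simpl in E1. destruct (hp w) as [_ P].
  apply nsq_zero_iff. pose proof (nsq_nonneg w). unfold nsq in *. nra.
Qed.

(* For positive S and mu > 0, S^2 v = mu^2 v implies S v = mu v; this identifies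
   the eigenvectors of T with those of its square root. *)
Lemma sq_eig (S : H -> H) v mu : hlinear S -> hpositive S -> 0 < mu ->
  S (S v) = hscal (RtoC (mu * mu)) v -> S v = hscal (RtoC mu) v.
Proof.
  intros hl hp Hmu E.
  set (w := hsub (S v) (hscal (RtoC mu) v)).
  assert (W : hadd (S w) (hscal (RtoC mu) w) = hzero).
  { unfold w. rewrite (T_sub S hl), (T_scal S hl), E. veq. }
  pose proof (pos_inj S w mu hp Hmu W) as W0.
  apply vec_ext; intro z. pose proof (f_equal (fun v => Re (hinner v z)) W0) as E1.
  unfold w in E1; simpl in E1. autorewrite with ipsimp in E1 |- *. simpl in *. lra.
Qed.

End SquareRoot.

Fixpoint rsum (n : nat) (f : nat -> R) : R :=
  match n with O => 0 | S k => rsum k f + f k end.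

Lemma rsum_sum_f n f : rsum (S n) f = sum_f_R0 f n.
Proof. induction n; simpl in *; [ring|rewrite <- IHn; reflexivity]. Qed.

Lemma rsum_ext n f g : (forall k, (k < n)%nat -> f k = g k) -> rsum n f = rsum n g.
Proof. induction n; intro E; simpl; auto. rewrite IHn, E; auto. Qed.

Lemma rsum_le n f g : (forall k, (k < n)%nat -> f k <= g k) -> rsum n f <= rsum n g.
Proof. induction n; intro E; simpl; [lra|]. pose proof (E n ltac:(lia)). pose proof (IHn ltac:(intros; apply E; lia)). lra. Qed.

Lemma rsum_nonneg n f : (forall k, (k < n)%nat -> 0 <= f k) -> 0 <= rsum n f.
Proof. intro E. replace 0 with (rsum n (fun _ => 0)). apply rsum_le; auto.
  induction n; simpl; auto. rewrite IHn; [ring|intros; apply E; lia]. Qed.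

Lemma rsum_plus n f g : rsum n (fun k => f k + g k) = rsum n f + rsum n g.
Proof. induction n; simpl; [ring|rewrite IHn; ring]. Qed.
Lemma rsum_scal n a f : rsum n (fun k => a * f k) = a * rsum n f.
Proof. induction n; simpl; [ring|rewrite IHn; ring]. Qed.
Lemma rsum_zero n : rsum n (fun _ => 0) = 0.
Proof. induction n; simpl; [ring|rewrite IHn; ring]. Qed.

Lemma rsum_mono n m f : (n <= m)%nat -> (forall k, 0 <= f k) -> rsum n f <= rsum m f.
Proof. intros Hnm Hf. induction Hnm; [lra|simpl; pose proof (Hf m); lra]. Qed.

Lemma rsum_split n m f : rsum (n + m) f = rsum n f + rsum m (fun k => f (n + k)%nat).
Proof. induction m; simpl; rewrite ?Nat.add_0_r; [ring|]. rewrite Nat.add_succ_r; simpl; rewrite IHm; ring. Qed.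

Lemma rsum_single n j a : (j < n)%nat -> rsum n (fun k => if Nat.eqb k j then a else 0) = a.
Proof.
  induction n; intro Hj; [lia|simpl].
  destruct (Nat.eqb_spec n j).
  - subst. rewrite (rsum_ext _ _ (fun _ => 0)); [rewrite rsum_zero; ring|].
    intros k Hk; destruct (Nat.eqb_spec k j); [lia|auto].
  - rewrite IHn; [ring|lia].
Qed.

Lemma rsum_swap n m (f : nat -> nat -> R) :
  rsum n (fun i => rsum m (fun j => f i j)) = rsum m (fun j => rsum n (fun i => f i j)).
Proof.
  induction n; simpl. - rewrite rsum_zero; auto.
  - rewrite IHn, <- rsum_plus. reflexivity.
Qed.

Lemma rsum_const n c : rsum n (fun _ => c) = INR n * c.
Proof. induction n; [simpl; ring|]. rewrite S_INR; simpl; rewrite IHn; ring. Qed.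

Lemma rsum_term_le n (f : nat -> R) j : (forall k, 0 <= f k) -> (j < n)%nat -> f j <= rsum n f.
Proof.
  intros Hf Hj. induction n; [lia|]. simpl. destruct (Nat.eq_dec j n).
  - subst. pose proof (rsum_nonneg n f (fun k _ => Hf k)). lra.
  - pose proof (IHn ltac:(lia)). pose proof (Hf n). lra.
Qed.

Section FiniteSums.
Context {H : SepHilbert}.
Implicit Types x y z : H.

Fixpoint hsum (n : nat) (g : nat -> H) : H :=
  match n with O => hzero | S k => hadd (hsum k g) (g k) end.

Lemma Re_hsuml n g z : Re (hinner (hsum n g) z) = rsum n (fun k => Re (hinner (g k) z)).
Proof. induction n; simpl; autorewrite with ipsimp; [auto|rewrite IHn; auto]. Qed.
Lemma Im_hsuml n g z : Im (hinner (hsum n g) z) = rsum n (fun k => Im (hinner (g k) z)).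
Proof. induction n; simpl; autorewrite with ipsimp; [auto|rewrite IHn; auto]. Qed.
Lemma Re_hsumr n g z : Re (hinner z (hsum n g)) = rsum n (fun k => Re (hinner z (g k))).
Proof. induction n; simpl; autorewrite with ipsimp; [auto|rewrite IHn; auto]. Qed.
Lemma Im_hsumr n g z : Im (hinner z (hsum n g)) = rsum n (fun k => Im (hinner z (g k))).
Proof. induction n; simpl; autorewrite with ipsimp; [auto|rewrite IHn; auto]. Qed.

Lemma T_hsum (T : H -> H) n g : hlinear T -> T (hsum n g) = hsum n (fun k => T (g k)).
Proof. intro hl. induction n; simpl. apply (T_zero T hl). rewrite (T_add T hl), IHn; auto. Qed.

Lemma hsum_ext n (g g' : nat -> H) : (forall k, (k < n)%nat -> g k = g' k) -> hsum n g = hsum n g'.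
Proof. induction n; intro E; simpl; auto. rewrite IHn, E; auto. Qed.

Lemma hscal_hsum a n (g : nat -> H) : hscal a (hsum n g) = hsum n (fun k => hscal a (g k)).
Proof. induction n; simpl. apply hscal_zero. rewrite hscal_distr_v, IHn; auto. Qed.

Lemma hsum_zero n (g : nat -> H) : (forall k, (k < n)%nat -> g k = hzero) -> hsum n g = hzero.
Proof. induction n; intro E; simpl; auto. rewrite IHn, E, hadd_zero; auto. Qed.

(* An orthogonal family whose vectors are each zero or of norm one; eigenvector
   sequences padded by zero vectors are of this kind. *)
Definition ortho_family (u : nat -> H) : Prop :=
  (forall i j, i <> j -> hinner (u i) (u j) = C0) /\
  (forall i, hinner (u i) (u i) = C0 \/ hinner (u i) (u i) = C1).

Definition proj (u : nat -> H) n x := hsum n (fun j => hscal (hinner x (u j)) (u j)).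

Lemma ortho_family_zero_or_unit u i : ortho_family u -> (u i = hzero /\ nsq (u i) = 0) \/ nsq (u i) = 1.
Proof.
  intros [_ U]. destruct (U i) as [E|E]; [left|right]; unfold nsq; rewrite E; simpl; auto.
  split; auto. apply hinner_def. rewrite E; auto.
Qed.

Lemma coef_zero u x j : ortho_family u -> nsq (u j) = 0 -> hinner x (u j) = C0.
Proof.
  intros O N. destruct (ortho_family_zero_or_unit u j O) as [[Z _]|E]; [|lra].
  rewrite Z. apply C_ext; simpl; autorewrite with ipsimp; auto.
Qed.

Lemma sum_inner_u u n a j : ortho_family u ->
  hinner (hsum n (fun k => hscal (a k) (u k))) (u j) =
  if Nat.ltb j n then Cmul (a j) (hinner (u j) (u j)) else C0.
Proof.
  intro O. destruct O as [Oo Ou].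
  apply C_ext; rewrite ?Re_hsuml, ?Im_hsuml.
  - destruct (Nat.ltb_spec j n).
    + rewrite (rsum_ext _ _ (fun k => if Nat.eqb k j then Re (Cmul (a j) (hinner (u j) (u j))) else 0)).
      apply rsum_single; auto.
      intros k Hk. destruct (Nat.eqb_spec k j). subst. rewrite hinner_scal_l; auto.
      rewrite Re_scall, (Oo k j n0); simpl; ring.
    + simpl. rewrite (rsum_ext _ _ (fun _ => 0)). apply rsum_zero.
      intros k Hk. rewrite Re_scall, (Oo k j); simpl; [ring|lia].
  - destruct (Nat.ltb_spec j n).
    + rewrite (rsum_ext _ _ (fun k => if Nat.eqb k j then Im (Cmul (a j) (hinner (u j) (u j))) else 0)).
      apply rsum_single; auto.
      intros k Hk. destruct (Nat.eqb_spec k j). subst. rewrite hinner_scal_l; auto.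
      rewrite Im_scall, (Oo k j n0); simpl; ring.
    + simpl. rewrite (rsum_ext _ _ (fun _ => 0)). apply rsum_zero.
      intros k Hk. rewrite Im_scall, (Oo k j); simpl; [ring|lia].
Qed.

Lemma proj_inner_u u n x j : ortho_family u -> (j < n)%nat -> hinner (proj u n x) (u j) = hinner x (u j).
Proof.
  intros O Hj. unfold proj. rewrite sum_inner_u; auto.
  destruct (Nat.ltb_spec j n); [|lia].
  destruct (ortho_family_zero_or_unit u j O) as [[Z N]|N].
  - rewrite (coef_zero u x j O N). apply C_ext; simpl; ring.
  - assert (E : hinner (u j) (u j) = C1) by (apply C_ext; [exact N|apply Im_self]).
    rewrite E; apply C_ext; simpl; ring.
Qed.

Lemma resid_orth u n x j : ortho_family u -> (j < n)%nat -> hinner (hsub x (proj u n x)) (u j) = C0.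
Proof.
  intros O Hj. apply C_ext; autorewrite with ipsimp; rewrite proj_inner_u; auto; simpl; ring.
Qed.

Lemma orth_sum u n a y : (forall j, (j < n)%nat -> hinner y (u j) = C0) ->
  hinner y (hsum n (fun k => hscal (a k) (u k))) = C0.
Proof.
  intro Hy. apply C_ext; rewrite ?Re_hsumr, ?Im_hsumr; simpl;
  [rewrite (rsum_ext _ _ (fun _ => 0)); [apply rsum_zero|]|rewrite (rsum_ext _ _ (fun _ => 0)); [apply rsum_zero|]];
  intros k Hk; autorewrite with ipsimp; rewrite (Hy k Hk); simpl; ring.
Qed.

Lemma proj_zero_coef (u : nat -> H) n x : (forall k, (k < n)%nat -> hinner x (u k) = C0) -> proj u n x = hzero.
Proof.
  intro Hc. unfold proj. apply hsum_zero. intros k Hk. rewrite Hc by auto. apply hscal_C0.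
Qed.

Lemma nsq_proj u n x : ortho_family u -> nsq (proj u n x) = rsum n (fun j => Cnorm2 (hinner x (u j))).
Proof.
  intro O. unfold nsq. unfold proj at 1. rewrite Re_hsuml.
  apply rsum_ext. intros k Hk. rewrite Re_scall.
  rewrite (Re_sym (proj u n x) (u k)), (Im_sym (proj u n x) (u k)), proj_inner_u; auto.
  unfold Cnorm2; ring.
Qed.

Lemma Re_x_proj u n x : ortho_family u -> Re (hinner x (proj u n x)) = rsum n (fun j => Cnorm2 (hinner x (u j))).
Proof.
  intro O. unfold proj. rewrite Re_hsumr. apply rsum_ext; intros k Hk.
  rewrite Re_scalr. unfold Cnorm2; ring.
Qed.

Lemma nsq_resid u n x : ortho_family u ->
  nsq (hsub x (proj u n x)) = nsq x - rsum n (fun j => Cnorm2 (hinner x (u j))).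
Proof. intro O. rewrite nsq_sub, nsq_proj, Re_x_proj; auto; ring. Qed.

Lemma bessel_fin u n x : ortho_family u -> rsum n (fun j => Cnorm2 (hinner x (u j))) <= nsq x.
Proof. intro O. pose proof (nsq_nonneg (hsub x (proj u n x))) as Hr. rewrite nsq_resid in Hr; auto; lra. Qed.

End FiniteSums.

Section EigenQuadratic.
Context {H : SepHilbert}.
Implicit Types x y z : H.
Variable T : H -> H.
Hypothesis hl : hlinear T.
Hypothesis hp : hpositive T.
Variable u : nat -> H.
Variable lam : nat -> R.
Hypothesis Ou : ortho_family u.
Hypothesis Eu : forall j, T (u j) = hscal (RtoC (lam j)) (u j).

Lemma T_proj n x : T (proj u n x) = hsum n (fun j => hscal (Cmul (hinner x (u j)) (RtoC (lam j))) (u j)).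
Proof.
  unfold proj. rewrite (T_hsum T n _ hl). f_equal. apply functional_extensionality; intro j.
  rewrite (T_scal T hl), Eu, hscal_assoc. reflexivity.
Qed.

Lemma Re_x_Tproj n x : Re (hinner x (T (proj u n x))) = rsum n (fun j => lam j * Cnorm2 (hinner x (u j))).
Proof.
  rewrite T_proj, Re_hsumr. apply rsum_ext; intros k Hk. rewrite Re_scalr. simpl.
  unfold Cnorm2; ring.
Qed.

Lemma Re_Tproj_proj n x : Re (hinner (T (proj u n x)) (proj u n x)) = rsum n (fun j => lam j * Cnorm2 (hinner x (u j))).
Proof.
  rewrite T_proj, Re_hsuml. apply rsum_ext; intros k Hk. rewrite Re_scall.
  rewrite (Re_sym (proj u n x) (u k)), (Im_sym (proj u n x) (u k)), proj_inner_u; auto.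
  simpl; unfold Cnorm2; ring.
Qed.

Lemma eig_quad n x : Re (hinner (T (hsub x (proj u n x))) (hsub x (proj u n x))) =
  Re (hinner (T x) x) - rsum n (fun j => lam j * Cnorm2 (hinner x (u j))).
Proof.
  rewrite (T_sub T hl). autorewrite with ipsimp.
  rewrite Re_Tproj_proj, (TRe_adj T hl hp x (proj u n x)), Re_x_Tproj.
  rewrite (Re_sym x (T (proj u n x))), Re_x_Tproj. ring.
Qed.

Lemma eig_bessel n x : rsum n (fun j => lam j * Cnorm2 (hinner x (u j))) <= Re (hinner (T x) x).
Proof. pose proof (eig_quad n x). destruct (hp (hsub x (proj u n x))) as [_ P]. lra. Qed.

End EigenQuadratic.

Lemma cv_const c : Un_cv (fun _ => c) c.
Proof. intros e He; exists O; intros; unfold Rdist; rewrite Rminus_diag, Rabs_R0; auto. Qed.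

Lemma series_partial_le a s N : (forall n, 0 <= a n) -> infinite_sum a s -> rsum N a <= s.
Proof.
  intros Ha Hs. destruct N.
  - simpl. destruct (Rle_or_lt 0 s); auto. destruct (Hs (- s)) as [N HN]; [lra|].
    specialize (HN N (le_n _)). unfold Rdist in HN.
    rewrite <- rsum_sum_f in HN. pose proof (rsum_nonneg (S N) a (fun k _ => Ha k)).
    rewrite Rabs_right in HN; lra.
  - rewrite rsum_sum_f. apply (growing_ineq (sum_f_R0 a)); auto.
    intro n; simpl; pose proof (Ha (S n)); lra.
Qed.

Lemma series_bound a s B : infinite_sum a s -> (forall N, rsum N a <= B) -> s <= B.
Proof.
  intros Hs HB. destruct (Rle_or_lt s B); auto.
  destruct (Hs (s - B)) as [N HN]; [lra|]. specialize (HN N (le_n _)).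
  unfold Rdist in HN. rewrite <- rsum_sum_f in HN. specialize (HB (S N)).
  apply Rabs_def2 in HN. lra.
Qed.

Lemma series_exists a B : (forall n, 0 <= a n) -> (forall N, rsum N a <= B) ->
  exists s, infinite_sum a s /\ s <= B.
Proof.
  intros Ha HB.
  assert (G : Un_growing (sum_f_R0 a)) by (intro n; simpl; pose proof (Ha (S n)); lra).
  assert (U : has_ub (sum_f_R0 a)).
  { exists B. intros x [n ->]. rewrite <- rsum_sum_f. apply HB. }
  destruct (growing_cv _ G U) as [s Hs]. exists s. split; [exact Hs|].
  apply (series_bound a); auto.
Qed.

Lemma series_unique a s1 s2 : infinite_sum a s1 -> infinite_sum a s2 -> s1 = s2.
Proof. intros H1 H2. apply (UL_sequence (sum_f_R0 a)); auto. Qed.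

Lemma series_le_compare a b s t : (forall n, a n <= b n) -> infinite_sum a s -> infinite_sum b t -> s <= t.
Proof. intros Hab Ha Hb. eapply Rle_cv_lim; [|exact Ha|exact Hb].
  intro n. rewrite <- !rsum_sum_f. apply rsum_le; auto. Qed.

Lemma series_compare a b t : (forall n, 0 <= a n <= b n) -> infinite_sum b t ->
  exists s, infinite_sum a s /\ s <= t.
Proof.
  intros Hab Hb. apply series_exists. intro n; apply Hab.
  intro N. apply Rle_trans with (rsum N b). apply rsum_le; intros; apply Hab.
  apply series_partial_le; auto. intro n; pose proof (Hab n); lra.
Qed.

Lemma series_plus a b s t : infinite_sum a s -> infinite_sum b t ->
  infinite_sum (fun n => a n + b n) (s + t).
Proof.
  intros Ha Hb. unfold infinite_sum.
  assert (E : sum_f_R0 (fun n => a n + b n) = fun n => sum_f_R0 a n + sum_f_R0 b n).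
  { apply functional_extensionality; intro n. rewrite <- !rsum_sum_f, <- rsum_plus; reflexivity. }
  change (Un_cv (sum_f_R0 (fun n => a n + b n)) (s + t)). rewrite E. apply CV_plus; auto.
Qed.

Lemma series_scal a s c : infinite_sum a s -> infinite_sum (fun n => c * a n) (c * s).
Proof.
  intros Ha. change (Un_cv (sum_f_R0 (fun n => c * a n)) (c * s)).
  assert (E : sum_f_R0 (fun n => c * a n) = fun n => c * sum_f_R0 a n).
  { apply functional_extensionality; intro n. rewrite <- !rsum_sum_f, <- rsum_scal; reflexivity. }
  rewrite E. apply CV_mult; [apply cv_const|exact Ha].
Qed.

Lemma series_zero : infinite_sum (fun _ => 0) 0.
Proof. intros e He. exists O. intros n _. unfold Rdist. rewrite <- rsum_sum_f, rsum_zero, Rminus_diag, Rabs_R0. auto. Qed.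

Lemma series_finsum J (w : nat -> nat -> R) (F : nat -> R) :
  (forall j, (j < J)%nat -> infinite_sum (fun n => w n j) (F j)) ->
  infinite_sum (fun n => rsum J (fun j => w n j)) (rsum J F).
Proof.
  induction J; intro Hw; simpl. apply series_zero.
  apply series_plus; auto.
Qed.

Lemma series_ext a b s : (forall n, a n = b n) -> infinite_sum a s -> infinite_sum b s.
Proof. intros E Ha. replace b with a; auto. apply functional_extensionality; auto. Qed.

Lemma series_tail_small a s eps : infinite_sum a s -> 0 < eps -> exists N, s - rsum N a < eps.
Proof.
  intros Hs He. destruct (Hs eps He) as [N HN]. exists (S N). specialize (HN N (le_n _)).
  unfold Rdist in HN. rewrite <- rsum_sum_f in HN. apply Rabs_def2 in HN. lra.
Qed.

Lemma tail_bound a b c G N1 : (forall n, 0 <= a n) -> (forall n, 0 <= b n) -> 0 <= c ->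
  (forall n, (N1 <= n)%nat -> a n <= c * b n) -> infinite_sum b G ->
  forall M, rsum M a <= rsum N1 a + c * (G - rsum N1 b).
Proof.
  intros Ha Hb Hc Hab HG M.
  pose proof (series_partial_le b G N1 Hb HG) as P1.
  destruct (le_lt_dec M N1).
  - pose proof (rsum_mono M N1 a l Ha). nra.
  - replace M with (N1 + (M - N1))%nat by lia. rewrite !rsum_split.
    pose proof (series_partial_le b G (N1 + (M - N1)) Hb HG) as P2. rewrite rsum_split in P2.
    assert (rsum (M - N1) (fun k => a (N1 + k)%nat) <= c * rsum (M - N1) (fun k => b (N1 + k)%nat)).
    { rewrite <- rsum_scal. apply rsum_le. intros; apply Hab; lia. }
    nra.
Qed.

Lemma cv_finite_uniform (b : nat -> nat -> R) (L : nat -> R) :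
  (forall c, Un_cv (b c) (L c)) -> forall N d, 0 < d -> exists k0, forall k, (k0 <= k)%nat ->
  forall c, (c < N)%nat -> Rabs (b c k - L c) < d.
Proof.
  intros Hc N d Hd. induction N.
  - exists O; intros; lia.
  - destruct IHN as [k1 Hk1]. destruct (Hc N d Hd) as [k2 Hk2].
    exists (Nat.max k1 k2). intros k Hk c Hcn.
    destruct (Nat.eq_dec c N). subst. apply Hk2; lia. apply Hk1; lia.
Qed.

Lemma Un_cv_le_const (a : nat -> R) l c : Un_cv a l -> (forall n, a n <= c) -> l <= c.
Proof.
  intros Ha Hc. destruct (Rle_or_lt l c); auto. destruct (Ha (l - c)) as [N HN]; [lra|].
  specialize (HN N (le_n _)). specialize (Hc N). unfold Rdist in HN. apply Rabs_def2 in HN. lra.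
Qed.

Lemma Un_cv_ge_const (a : nat -> R) l c : Un_cv a l -> (forall n, c <= a n) -> c <= l.
Proof.
  intros Ha Hc. destruct (Rle_or_lt c l); auto. destruct (Ha (c - l)) as [N HN]; [lra|].
  specialize (HN N (le_n _)). specialize (Hc N). unfold Rdist in HN. apply Rabs_def2 in HN. lra.
Qed.

Lemma cv_c_over_n c : Un_cv (fun n => c / INR (S n)) 0.
Proof.
  intros e He. destruct (archimed ((Rabs c + 1) / e)) as [Ha _].
  assert (Hz : (0 <= up ((Rabs c + 1) / e))%Z).
  { apply le_IZR. pose proof (Rabs_pos c). assert (0 < (Rabs c + 1) / e) by (apply Rdiv_lt_0_compat; lra). simpl; lra. }
  exists (Z.to_nat (up ((Rabs c + 1) / e))). intros n Hn. unfold Rdist. rewrite Rminus_0_r.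
  assert (HS : 0 < INR (S n)) by (apply lt_0_INR; lia).
  assert (HI : (Rabs c + 1) / e < INR (S n)).
  { apply Rlt_le_trans with (IZR (up ((Rabs c + 1) / e))); auto.
    rewrite <- (Z2Nat.id (up ((Rabs c + 1) / e))) by auto.
    rewrite <- INR_IZR_INZ. apply le_INR. lia. }
  unfold Rdiv. rewrite Rabs_mult, Rabs_inv, (Rabs_right (INR (S n))) by lra.
  apply (Rmult_lt_reg_r (INR (S n))); auto. rewrite Rmult_assoc, Rinv_l, Rmult_1_r by lra.
  apply (Rmult_lt_compat_r e) in HI; auto. unfold Rdiv in HI. rewrite Rmult_assoc, Rinv_l, Rmult_1_r in HI by lra.
  lra.
Qed.

Lemma cv_squeeze0 (a b : nat -> R) : (forall n, 0 <= a n <= b n) -> Un_cv b 0 -> Un_cv a 0.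
Proof.
  intros Hab Hb e He. destruct (Hb e He) as [N HN]. exists N. intros n Hn. specialize (HN n Hn).
  specialize (Hab n). unfold Rdist in *. rewrite Rminus_0_r in *. rewrite Rabs_right in * by lra. lra.
Qed.

Lemma cv_ge_with_err (a e : nat -> R) l c : Un_cv a l -> Un_cv e 0 -> (forall n, c - e n <= a n) -> c <= l.
Proof.
  intros Ha He Hc. assert (S : Un_cv (fun n => a n + e n) (l + 0)) by (apply CV_plus; auto).
  rewrite Rplus_0_r in S. apply (Un_cv_ge_const _ _ c S). intro n; specialize (Hc n); lra.
Qed.

Lemma cv_rsum_to_series a s : Un_cv (fun N => rsum N a) s -> infinite_sum a s.
Proof.
  intro C. pose proof (CV_shift' _ 1 _ C) as C2. eapply Un_cv_ext; [|exact C2].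
  intro n. simpl. rewrite Nat.add_1_r, rsum_sum_f. reflexivity.
Qed.

Definition strict_inc (phi : nat -> nat) := forall n, (phi n < phi (S n))%nat.

Lemma strict_inc_ge phi : strict_inc phi -> forall n, (n <= phi n)%nat.
Proof. intros Hp n; induction n; [lia|]. pose proof (Hp n); lia. Qed.

Lemma strict_inc_mono phi : strict_inc phi -> forall n m, (n < m)%nat -> (phi n < phi m)%nat.
Proof. intros Hp n m Hnm; induction Hnm; [apply Hp|]. pose proof (Hp m); lia. Qed.

Lemma strict_inc_comp phi psi : strict_inc phi -> strict_inc psi -> strict_inc (fun n => phi (psi n)).
Proof. intros Hp Hq n. apply strict_inc_mono; auto. Qed.

Lemma bounded_subseq_cv (a : nat -> R) B : (forall n, Rabs (a n) <= B) ->
  exists phi, strict_inc phi /\ exists l, Un_cv (fun n => a (phi n)) l.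
Proof.
  intro Hb. destruct (Bolzano_Weierstrass a (fun c => -B <= c <= B) (compact_P3 (-B) B)) as [l Hl].
  { intro n. specialize (Hb n). pose proof (Rle_abs (a n)). pose proof (Rle_abs (- a n)). rewrite Rabs_Ropp in *. lra. }
  assert (step : forall k N : nat, {p : nat | (N <= p)%nat /\ Rabs (a p - l) < / INR (S k)}).
  { intros k N. apply constructive_indefinite_description.
    assert (Hpos : 0 < / INR (S k)) by (apply Rinv_0_lt_compat, lt_0_INR; lia).
    destruct (Hl (fun y => Rabs (y - l) < / INR (S k)) N) as [p Hp].
    - exists (mkposreal _ Hpos). intros y Hy. exact Hy.
    - exists p; exact Hp. }
  set (g := fun k N => proj1_sig (step k N)).

  set (phi := fix phi n := match n with O => g O O | S m => g (S m) (S (phi m)) end).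
  exists phi. split.
  - intro n. change (phi (S n)) with (g (S n) (S (phi n))). unfold g.
    pose proof (proj2_sig (step (S n) (S (phi n)))) as [Hp _]. lia.
  - exists l. intros e He.
    destruct (archimed (/ e)) as [Ha _].
    assert (Hz : (0 <= up (/ e))%Z).
    { apply le_IZR. pose proof (Rinv_0_lt_compat e He). simpl; lra. }
    exists (Z.to_nat (up (/ e))). intros n Hn. unfold Rdist.
    assert (Hbound : Rabs (a (phi n) - l) < / INR (S n)).
    { destruct n. change (phi O) with (g O O). unfold g. apply (proj2_sig (step O O)).
      change (phi (S n)) with (g (S n) (S (phi n))). unfold g. apply (proj2_sig (step (S n) (S (phi n)))). }
    apply Rlt_le_trans with (/ INR (S n)); auto.
    assert (HI : / e < INR (S n)).
    { apply Rlt_le_trans with (IZR (up (/ e))); auto. rewrite <- (Z2Nat.id (up (/ e))) by auto.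
      rewrite <- INR_IZR_INZ. apply le_INR. lia. }
    pose proof (Rinv_0_lt_compat e He).
    rewrite <- (Rinv_inv e). apply Rinv_le_contravar; lra.
Qed.

Definition bw_extraction (a : nat -> R) : nat -> nat :=
  epsilon (inhabits (fun n : nat => n)) (fun phi => strict_inc phi /\ exists l, Un_cv (fun n => a (phi n)) l).

Lemma bw_extraction_spec a B : (forall n, Rabs (a n) <= B) ->
  strict_inc (bw_extraction a) /\ exists l, Un_cv (fun n => a (bw_extraction a n)) l.
Proof. intro Hb. unfold bw_extraction. apply epsilon_spec. apply (bounded_subseq_cv a B Hb). Qed.

Section Diagonal.
Variable a : nat -> nat -> R.
Variable B : nat -> R.
Hypothesis Hb : forall c k, Rabs (a c k) <= B c.

Fixpoint nested_extraction (c : nat) : nat -> nat :=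
  match c with
  | O => bw_extraction (a O)
  | S c' => fun k => nested_extraction c' (bw_extraction (fun m => a (S c') (nested_extraction c' m)) k)
  end.

Lemma nested_extraction_spec c : strict_inc (nested_extraction c) /\ exists l, Un_cv (fun k => a c (nested_extraction c k)) l.
Proof.
  induction c.
  - apply (bw_extraction_spec (a O) (B O)). intro; apply Hb.
  - destruct IHc as [Hs _].
    destruct (bw_extraction_spec (fun m => a (S c) (nested_extraction c m)) (B (S c))) as [He Hl]. intro; apply Hb.
    split. simpl. apply strict_inc_comp; auto. simpl. exact Hl.
Qed.

Lemma nested_extraction_sub c d : (c <= d)%nat -> forall k, exists m, (k <= m)%nat /\ nested_extraction d k = nested_extraction c m.
Proof.
  intro Hcd. induction Hcd; intro k. exists k; auto.
  simpl. set (e := bw_extraction (fun m0 => a (S m) (nested_extraction m m0))).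
  assert (He : strict_inc e).
  { apply (bw_extraction_spec _ (B (S m))). intro; apply Hb. }
  destruct (IHHcd (e k)) as [m' [Hm' E]]. exists m'. split; auto.
  pose proof (strict_inc_ge e He k). lia.
Qed.

Lemma diag_extract : exists phi, strict_inc phi /\ forall c, exists l, Un_cv (fun k => a c (phi k)) l.
Proof.
  exists (fun k => nested_extraction k k). split.
  - intro n. simpl. set (e := bw_extraction (fun m0 => a (S n) (nested_extraction n m0))).
    assert (He : strict_inc e) by (apply (bw_extraction_spec _ (B (S n))); intro; apply Hb).
    apply strict_inc_mono. apply nested_extraction_spec. pose proof (strict_inc_ge e He (S n)). lia.
  - intro c. destruct (nested_extraction_spec c) as [Hs [l Hl]]. exists l. intros e He.
    destruct (Hl e He) as [N HN]. exists (Nat.max N c). intros k Hk.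
    destruct (nested_extraction_sub c k ltac:(lia) k) as [m [Hm E]]. rewrite E. apply HN. lia.
Qed.

End Diagonal.

Section Convergence.
Context {H : SepHilbert}.
Implicit Types x y z : H.

Lemma Im_CS x y : Rabs (Im (hinner x y)) <= hnorm x * hnorm y.
Proof.
  apply le_of_square_le. apply Rmult_le_pos; apply hnorm_nonneg.
  replace (hnorm x * hnorm y * (hnorm x * hnorm y)) with (nsq x * nsq y)
    by (rewrite <- !hnorm_sq; ring).
  pose proof (CS x y) as Hcs. unfold Cnorm2 in Hcs.
  rewrite <- Rabs_mult, Rabs_right by nra. nra.
Qed.

Lemma hnorm_lt_nsq x e : 0 < e -> nsq x < e * e -> hnorm x < e.
Proof.
  intros He Hx. apply Rnot_le_lt; intro C. pose proof (hnorm_nonneg x).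
  rewrite <- hnorm_sq in Hx. nra.
Qed.

Lemma nsq_lt_hnorm x e : 0 < e -> hnorm x < e -> nsq x < e * e.
Proof. intros He Hx. rewrite <- hnorm_sq. pose proof (hnorm_nonneg x). nra. Qed.

Lemma cauchy_conv (u : nat -> H) :
  (forall eps, 0 < eps -> exists N, forall m n, (N <= m)%nat -> (N <= n)%nat -> nsq (hsub (u m) (u n)) < eps) ->
  exists l, hconv u l.
Proof.
  intro Hc. destruct (hcomplete H u) as [l Hl].
  - intros e He. destruct (Hc (e * e)) as [N HN]. nra. exists N. intros m n Hm Hn.
    exact (hnorm_lt_nsq (hsub (u m) (u n)) e He (HN m n Hm Hn)).
  - exists l. exact Hl.
Qed.

Lemma hconv_lipschitz (u : nat -> H) l (g : nat -> R) g0 K : hconv u l -> 0 <= K ->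
  (forall n, Rabs (g n - g0) <= hnorm (hsub (u n) l) * K) -> Un_cv g g0.
Proof.
  intros Hu HK Hg e He. destruct (Hu (e / (K + 1))) as [N HN]; [apply Rdiv_lt_0_compat; lra|].
  exists N. intros n Hn. unfold Rdist. specialize (HN n Hn). pose proof (hnorm_nonneg (hsub (u n) l)).
  apply Rle_lt_trans with (hnorm (hsub (u n) l) * (K + 1)); [pose proof (Hg n); nra|].
  apply (Rmult_lt_compat_r (K + 1)) in HN; [|lra].
  unfold Rdiv in HN. rewrite Rmult_assoc, Rinv_l, Rmult_1_r in HN; lra.
Qed.

Lemma hconv_Re (u : nat -> H) l z : hconv u l -> Un_cv (fun n => Re (hinner (u n) z)) (Re (hinner l z)).
Proof.
  intro Hu. apply (hconv_lipschitz u l _ _ (hnorm z) Hu (hnorm_nonneg z)).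
  intro n. rewrite <- Re_subl. apply Re_CS.
Qed.

Lemma hconv_Im (u : nat -> H) l z : hconv u l -> Un_cv (fun n => Im (hinner (u n) z)) (Im (hinner l z)).
Proof.
  intro Hu. apply (hconv_lipschitz u l _ _ (hnorm z) Hu (hnorm_nonneg z)).
  intro n. rewrite <- Im_subl. apply Im_CS.
Qed.

Lemma hconv_Re_r (u : nat -> H) l z : hconv u l -> Un_cv (fun n => Re (hinner z (u n))) (Re (hinner z l)).
Proof. intro Hu. rewrite (Re_sym l z). eapply Un_cv_ext; [|apply (hconv_Re u l z Hu)]. intro n; simpl; apply (Re_sym z (u n)). Qed.

Lemma hconv_unique (u : nat -> H) l1 l2 : hconv u l1 -> hconv u l2 -> l1 = l2.
Proof.
  intros H1 H2. apply vec_ext; intro z. apply (UL_sequence (fun n => Re (hinner (u n) z))); apply hconv_Re; auto.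
Qed.

Lemma hconv_iff (u : nat -> H) l : hconv u l <-> Un_cv (fun n => nsq (hsub (u n) l)) 0.
Proof.
  split.
  - intros Hu e He. destruct (Hu (sqrt e)) as [N HN]. apply sqrt_lt_R0; auto.
    exists N. intros n Hn. unfold Rdist. rewrite Rminus_0_r, Rabs_right by apply Rle_ge, nsq_nonneg.
    pose proof (nsq_lt_hnorm _ _ (sqrt_lt_R0 e He) (HN n Hn)) as Hlt. rewrite sqrt_sqrt in Hlt; lra.
  - intros Hu e He. destruct (Hu (e * e)) as [N HN]. nra. exists N. intros n Hn.
    specialize (HN n Hn). unfold Rdist in HN. rewrite Rminus_0_r, Rabs_right in HN by apply Rle_ge, nsq_nonneg.
    apply hnorm_lt_nsq; auto.
Qed.

Lemma hconv_nsq (u : nat -> H) l : hconv u l -> Un_cv (fun n => nsq (u n)) (nsq l).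
Proof.
  intro Hu. pose proof (proj1 (hconv_iff u l) Hu) as A2.
  assert (A1 : Un_cv (fun n => Re (hinner (u n) l)) (Re (hinner l l))) by (apply hconv_Re; auto).
  assert (C : Un_cv (fun n => nsq (hsub (u n) l) + 2 * Re (hinner (u n) l) - nsq l) (0 + 2 * Re (hinner l l) - nsq l)).
  { apply CV_minus; [apply CV_plus; [exact A2|apply CV_mult; [apply cv_const|exact A1]]|apply cv_const]. }
  replace (0 + 2 * Re (hinner l l) - nsq l) with (nsq l) in C by (unfold nsq; ring).
  eapply Un_cv_ext; [|exact C]. intro n; simpl. rewrite nsq_sub. ring.
Qed.

Definition opbound (T : H -> H) (K : R) := 0 <= K /\ forall x, hnorm (T x) <= K * hnorm x.

Lemma opbound_ex (T : H -> H) : hbounded T -> exists K, opbound T K.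
Proof.
  intros [M HM]. exists (Rabs M). split. apply Rabs_pos. intro x.
  apply Rle_trans with (M * hnorm x); auto. pose proof (hnorm_nonneg x).
  pose proof (Rle_abs M). nra.
Qed.

Lemma opbound_nsq (T : H -> H) K x : opbound T K -> nsq (T x) <= K * K * nsq x.
Proof.
  intros [HK Hb]. rewrite <- !hnorm_sq. specialize (Hb x). pose proof (hnorm_nonneg (T x)).
  pose proof (hnorm_nonneg x). nra.
Qed.

Lemma opbound_quad (T : H -> H) K x : opbound T K -> Re (hinner (T x) x) <= K * nsq x.
Proof.
  intros [HK Hb]. pose proof (Re_CS (T x) x). pose proof (Rle_abs (Re (hinner (T x) x))).
  specialize (Hb x). pose proof (hnorm_nonneg x). rewrite <- hnorm_sq. nra.
Qed.

Lemma hconv_T (T : H -> H) (u : nat -> H) l K : hlinear T -> opbound T K -> hconv u l -> hconv (fun n => T (u n)) (T l).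
Proof.
  intros hl Hb Hu. apply hconv_iff. apply hconv_iff in Hu.
  intros e He. destruct (Hu (e / (K * K + 1))) as [N HN]. apply Rdiv_lt_0_compat; auto; nra.
  exists N. intros n Hn. specialize (HN n Hn). unfold Rdist in *. rewrite Rminus_0_r in *.
  rewrite <- (T_sub T hl). rewrite Rabs_right in * by apply Rle_ge, nsq_nonneg.
  pose proof (opbound_nsq T K (hsub (u n) l) Hb). destruct Hb as [HK _].
  apply Rle_lt_trans with (K * K * nsq (hsub (u n) l)); auto.
  apply Rle_lt_trans with ((K * K + 1) * nsq (hsub (u n) l)). pose proof (nsq_nonneg (hsub (u n) l)); nra.
  apply (Rmult_lt_compat_l (K * K + 1)) in HN; [|nra]. unfold Rdiv in HN.
  rewrite <- Rmult_assoc, (Rmult_comm (K*K+1) e), Rmult_assoc, Rinv_r, Rmult_1_r in HN; nra.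
Qed.

End Convergence.

(* Accuracy for the head of a frame sum: N1 terms of size 8 d^2 add up to at most B/2. *)
Lemma head_accuracy N1 B : 0 < B -> exists d, 0 < d /\ INR N1 * (8 * (d * d)) <= B / 2.
Proof.
  intro HB. set (d := Rmin 1 (B / (16 * (INR N1 + 1)))). exists d.
  pose proof (pos_INR N1).
  assert (d1 : d <= 1) by apply Rmin_l.
  assert (d2 : d <= B / (16 * (INR N1 + 1))) by apply Rmin_r.
  assert (d0 : 0 < d) by (apply Rmin_pos; [lra|apply Rdiv_lt_0_compat; lra]).
  split; [exact d0|].
  assert (dd : d * d <= d) by nra.
  assert (INR N1 * (8 * (d * d)) <= (INR N1 + 1) * 8 * d) by nra.
  assert ((INR N1 + 1) * 8 * d <= (INR N1 + 1) * 8 * (B / (16 * (INR N1 + 1)))) by (apply Rmult_le_compat_l; nra).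
  assert (E : (INR N1 + 1) * 8 * (B / (16 * (INR N1 + 1))) = B / 2) by (field; lra).
  lra.
Qed.

Lemma scaled_small c t B : 0 <= c -> 0 <= t -> t < B / (2 * (c + 1)) -> c * t < B / 2.
Proof.
  intros Hc Ht Htb. apply Rle_lt_trans with ((c + 1) * t); [nra|].
  apply Rlt_le_trans with ((c + 1) * (B / (2 * (c + 1)))); [apply Rmult_lt_compat_l; lra|].
  right; field; lra.
Qed.

Definition lower_frame_ineq {H : SepHilbert} (f : nat -> H) (A : R) : Prop :=
  forall x, exists s, infinite_sum (frame_sum f x) s /\ A * nsq x <= s.

Section FrameCompact.
Context {H : SepHilbert}.
Variable T : H -> H.
Hypothesis hl : hlinear T.
Hypothesis hp : hpositive T.
Hypothesis hb : hbounded T.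
Variable f : nat -> H.
Variable A : R.
Hypothesis HA : 0 < A.
Hypothesis Hfr : lower_frame_ineq f A.
Variable G : R.
Hypothesis HG : infinite_sum (fun n => Re (hinner (T (f n)) (f n))) G.

Definition frame_coord (c : nat) (x : H) : R :=
  if Nat.even c then Re (hinner x (T (f (Nat.div2 c)))) else Im (hinner x (T (f (Nat.div2 c)))).

Lemma frame_coord_bound c x : Rabs (frame_coord c x) <= hnorm x * hnorm (T (f (Nat.div2 c))).
Proof. unfold frame_coord. destruct (Nat.even c); [apply Re_CS|apply Im_CS]. Qed.

Lemma frame_term_coord z k :
  frame_sum f (T z) k = frame_coord (2 * k) z * frame_coord (2 * k) z
                        + frame_coord (S (2 * k)) z * frame_coord (S (2 * k)) z.
Proof.
  unfold frame_sum, frame_coord. rewrite (T_adj T hl hp z (f k)).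
  rewrite Nat.even_succ, Nat.odd_mul, Nat.even_mul, Nat.div2_succ_double, Nat.div2_double.
  reflexivity.
Qed.

Lemma frame_coord_sub c x y : frame_coord c (hsub x y) = frame_coord c x - frame_coord c y.
Proof. unfold frame_coord. destruct (Nat.even c); autorewrite with ipsimp; reflexivity. Qed.

Lemma coordinate_subsequence (u : nat -> H) M : (forall n, hnorm (u n) <= M) ->
  exists phi, strict_inc phi /\ forall c, exists l, Un_cv (fun k => frame_coord c (u (phi k))) l.
Proof.
  intro HM. apply (diag_extract (fun c k => frame_coord c (u k)) (fun c => M * hnorm (T (f (Nat.div2 c))))).
  intros c k. eapply Rle_trans; [apply frame_coord_bound|].
  apply Rmult_le_compat_r; [apply hnorm_nonneg|apply HM].
Qed.

(* Tail estimate: |<Tz,f_n>|^2 <= <Tz,z> <Tf_n,f_n>, so beyond N1 the frame sum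
   of Tz is controlled by the tail of sum <Tf_n,f_n>. *)
Lemma frame_sum_tail z N1 c s : Re (hinner (T z) z) <= c -> infinite_sum (frame_sum f (T z)) s ->
  s <= rsum N1 (frame_sum f (T z)) + c * (G - rsum N1 (fun n => Re (hinner (T (f n)) (f n)))).
Proof.
  intros Hc Hs. assert (Hg : forall n, 0 <= Re (hinner (T (f n)) (f n))) by (intro n; apply hp).
  assert (c0 : 0 <= c) by (pose proof (proj2 (hp z)); lra).
  apply (series_bound (frame_sum f (T z)) s); auto. intro M1.
  eapply Rle_trans.
  - apply (tail_bound (frame_sum f (T z)) (fun n => Re (hinner (T (f n)) (f n))) c G N1); auto.
    + intro; apply Cnorm2_nonneg.
    + intros k _. unfold frame_sum. eapply Rle_trans; [apply (T_CS T hl hp)|].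
      apply Rmult_le_compat_r; [apply Hg|exact Hc].
  - lra.
Qed.

(* Compactness: along the coordinate-convergent subsequence, the head of the frame
   sum of T(u_m - u_n) is small by convergence and its tail by summability;
   the lower frame bound converts this into ||T u_m - T u_n|| -> 0. *)
Lemma frame_compact : hcompact T.
Proof.
  split; [exact hl|split; [exact hb|]].
  intros u [M HM]. destruct (opbound_ex T hb) as [K HK].
  assert (M0 : 0 <= M) by (pose proof (hnorm_nonneg (u O)); specialize (HM O); lra).
  destruct (coordinate_subsequence u M HM) as [phi [Hphi Hcv]].
  exists phi. split; [exact Hphi|]. apply cauchy_conv. intros eps Heps.
  destruct (choice (fun c l => Un_cv (fun k => frame_coord c (u (phi k))) l) Hcv) as [L HL].
  set (R0 := K * (4 * (M * M))).
  assert (R00 : 0 <= R0) by (unfold R0; destruct HK; nra).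
  assert (Hg : forall n, 0 <= Re (hinner (T (f n)) (f n))) by (intro n; apply hp).
  destruct (series_tail_small _ G (A * eps / (2 * (R0 + 1))) HG) as [N1 HN1].
  { apply Rdiv_lt_0_compat; nra. }
  destruct (head_accuracy N1 (A * eps) ltac:(nra)) as [d [Hd Hdd]].
  destruct (cv_finite_uniform (fun c k => frame_coord c (u (phi k))) L HL (2 * N1)%nat d Hd) as [k0 Hk0].
  exists k0. intros m n Hm Hn.
  set (z := hsub (u (phi m)) (u (phi n))).
  rewrite <- (T_sub T hl). fold z.
  destruct (Hfr (T z)) as [s [Hs HAs]].
  assert (HRz : Re (hinner (T z) z) <= R0).
  { eapply Rle_trans; [apply (opbound_quad T K z HK)|]. unfold R0. destruct HK as [K0 _].
    apply Rmult_le_compat_l; [exact K0|]. rewrite <- hnorm_sq. unfold z.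
    pose proof (hnorm_sub_le (u (phi m)) (u (phi n))). pose proof (HM (phi m)). pose proof (HM (phi n)).
    pose proof (hnorm_nonneg (hsub (u (phi m)) (u (phi n)))). nra. }
  assert (Hhead : rsum N1 (frame_sum f (T z)) <= INR N1 * (8 * (d * d))).
  { replace (INR N1 * (8 * (d * d))) with (rsum N1 (fun _ => 8 * (d * d))) by (rewrite rsum_const; ring).
    apply rsum_le. intros k Hk.
    rewrite frame_term_coord. unfold z. rewrite !frame_coord_sub.
    pose proof (Hk0 m Hm (2 * k)%nat ltac:(lia)). pose proof (Hk0 n Hn (2 * k)%nat ltac:(lia)).
    pose proof (Hk0 m Hm (S (2 * k)) ltac:(lia)). pose proof (Hk0 n Hn (S (2 * k)) ltac:(lia)).
    simpl in *.
    repeat match goal with Hx : Rabs _ < d |- _ => apply Rabs_def2 in Hx; destruct Hx end.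
    nra. }
  assert (Htail : R0 * (G - rsum N1 (fun n => Re (hinner (T (f n)) (f n)))) < A * eps / 2).
  { apply scaled_small; auto. pose proof (series_partial_le _ G N1 Hg HG). lra. }
  pose proof (frame_sum_tail z N1 R0 s HRz Hs).
  apply (Rmult_lt_reg_l A); [exact HA|lra].
Qed.

End FrameCompact.

Section LimitsOfVectors.
Context {H : SepHilbert}.
Implicit Types x y z : H.

Lemma hconv_close (a b : nat -> H) l : hconv a l -> Un_cv (fun n => nsq (hsub (a n) (b n))) 0 -> hconv b l.
Proof.
  intros Ha Hab e He. destruct (Ha (e/2)) as [N1 H1]; [lra|].
  destruct (Hab (e/2 * (e/2))) as [N2 H2]; [nra|].
  exists (Nat.max N1 N2). intros n Hn. specialize (H1 n ltac:(lia)). specialize (H2 n ltac:(lia)).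
  unfold Rdist in H2. rewrite Rminus_0_r, Rabs_right in H2 by apply Rle_ge, nsq_nonneg.
  assert (e2 : 0 < e/2) by lra. pose proof (hnorm_lt_nsq _ (e/2) e2 H2) as H3. rewrite hsub_sym_norm in H3.
  pose proof (hnorm_sub_triangle (b n) (a n) l). lra.
Qed.

Lemma hsub_scal c x y : hsub (hscal c x) (hscal c y) = hscal c (hsub x y).
Proof. veq. Qed.

Lemma hsub_zero x : hsub x hzero = x.
Proof. veq. Qed.

Lemma hconv_scal (a : nat -> H) l c : hconv a l -> hconv (fun n => hscal c (a n)) (hscal c l).
Proof.
  intro Ha. apply hconv_iff. apply hconv_iff in Ha.
  assert (C0' : Un_cv (fun n => (Re c * Re c + Im c * Im c) * nsq (hsub (a n) l)) ((Re c * Re c + Im c * Im c) * 0)).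
  { apply CV_mult; [apply cv_const|exact Ha]. }
  rewrite Rmult_0_r in C0'. eapply Un_cv_ext; [|exact C0']. intro n; simpl. rewrite hsub_scal, nsq_scal. reflexivity.
Qed.

Lemma hconv_sub_seq (a : nat -> H) l phi : strict_inc phi -> hconv a l -> hconv (fun n => a (phi n)) l.
Proof.
  intros Hp Ha e He. destruct (Ha e He) as [N HN]. exists N. intros n Hn. apply HN.
  pose proof (strict_inc_ge phi Hp n). lia.
Qed.

Lemma inner_orth_lim (a : nat -> H) l v : hconv a l -> (forall n, hinner (a n) v = C0) -> hinner l v = C0.
Proof.
  intros Ha Hv. apply C_ext; simpl.
  - apply (UL_sequence (fun n => Re (hinner (a n) v))). apply hconv_Re; auto.
    eapply Un_cv_ext; [intro n; rewrite Hv; reflexivity|apply cv_const].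
  - apply (UL_sequence (fun n => Im (hinner (a n) v))). apply hconv_Im; auto.
    eapply Un_cv_ext; [intro n; rewrite Hv; reflexivity|apply cv_const].
Qed.

End LimitsOfVectors.

Lemma approx_eigvec_limit {H : SepHilbert} (T : H -> H) (a : nat -> H) y M : 0 < M ->
  hconv (fun n => T (a n)) y -> Un_cv (fun n => nsq (hsub (T (a n)) (hscal (RtoC M) (a n)))) 0 ->
  hconv a (hscal (RtoC (/ M)) y).
Proof.
  intros HM Hy Hd. apply (hconv_close _ _ _ (hconv_scal _ _ (RtoC (/ M)) Hy)).
  assert (C : Un_cv (fun n => (/ M * / M) * nsq (hsub (T (a n)) (hscal (RtoC M) (a n)))) ((/ M * / M) * 0)).
  { apply CV_mult; auto. apply cv_const. }
  rewrite Rmult_0_r in C. eapply Un_cv_ext; [|exact C]. intro n. simpl.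
  assert (E : hsub (hscal (RtoC (/ M)) (T (a n))) (a n) =
              hscal (RtoC (/ M)) (hsub (T (a n)) (hscal (RtoC M) (a n)))).
  { apply vec_ext; intro z. autorewrite with ipsimp. simpl. field. lra. }
  rewrite E, nsq_scal. simpl. ring.
Qed.

(* The variational construction of the eigenvalues of a compact positive operator:
   the largest eigenvalue on the orthogonal complement of a list L of eigenvectors
   is the supremum of <Tx,x> over unit vectors x orthogonal to L. *)
Section Spectral.
Context {H : SepHilbert}.
Implicit Types x y z : H.
Variable T : H -> H.
Hypothesis hc : hcompact T.
Hypothesis hp : hpositive T.

Lemma compact_linear : hlinear T. Proof. apply hc. Qed.
Lemma compact_bounded : hbounded T. Proof. apply hc. Qed.

Definition is_eigvec (v : H) := exists c : R, T v = hscal (RtoC c) v.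
Definition orth_to_list (L : list H) x := forall v, In v L -> hinner x v = C0.
Definition rayleigh_values (L : list H) (r : R) := exists x, nsq x <= 1 /\ orth_to_list L x /\ r = Re (hinner (T x) x).
Definition rayleigh_sup (L : list H) : R := epsilon (inhabits 0) (is_lub (rayleigh_values L)).

(* The supremum exists since <Tx,x> <= K ||x||^2. *)
Lemma rayleigh_sup_lub L : is_lub (rayleigh_values L) (rayleigh_sup L).
Proof.
  unfold rayleigh_sup. apply epsilon_spec. destruct (opbound_ex T compact_bounded) as [K HK].
  assert (B : bound (rayleigh_values L)).
  { exists K. intros r [x [Hx [_ ->]]]. eapply Rle_trans; [apply (opbound_quad T K x HK)|].
    destruct HK; nra. }
  assert (NE : exists r, rayleigh_values L r).
  { exists (Re (hinner (T hzero) hzero)). exists hzero. split; [rewrite nsq_hzero; lra|]. split; auto.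
    intros v _; apply inner0l. }
  destruct (completeness _ B NE) as [m Hm]. exists m; exact Hm.
Qed.

Lemma compact_T_zero : T hzero = hzero. Proof. apply (T_zero T compact_linear). Qed.

Lemma rayleigh_sup_nonneg L : 0 <= rayleigh_sup L.
Proof.
  destruct (rayleigh_sup_lub L) as [U _]. apply U. exists hzero. split; [rewrite nsq_hzero; lra|]. split.
  intros v _; apply inner0l. rewrite compact_T_zero. autorewrite with ipsimp. auto.
Qed.

Lemma orth_to_list_scal L a x : orth_to_list L x -> orth_to_list L (hscal a x).
Proof. intros Ho v Hv. rewrite hinner_scal_l, (Ho v Hv). apply C_ext; simpl; ring. Qed.

Lemma rayleigh_sup_bound L x : orth_to_list L x -> Re (hinner (T x) x) <= rayleigh_sup L * nsq x.
Proof.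
  intro Ho. destruct (Rle_lt_or_eq_dec 0 (nsq x) (nsq_nonneg x)) as [Hx|Hx].
  - set (c := / hnorm x). assert (Hn : 0 < hnorm x) by (apply sqrt_lt_R0; auto).
    set (y := hscal (RtoC c) x).
    assert (Hy : nsq y = 1).
    { unfold y. rewrite nsq_scal. simpl. unfold c. rewrite <- hnorm_sq. field. lra. }
    assert (Qy : rayleigh_values L (Re (hinner (T y) y))).
    { exists y. split; [lra|]. split; auto. apply orth_to_list_scal; auto. }
    destruct (rayleigh_sup_lub L) as [U _]. specialize (U _ Qy).
    unfold y in U. rewrite (T_scal T compact_linear) in U. autorewrite with ipsimp in U. simpl in U.
    assert (E : c * c * nsq x = 1) by (unfold c; rewrite <- hnorm_sq; field; lra).
    assert (U2 : c * c * Re (hinner (T x) x) <= rayleigh_sup L) by (ring_simplify in U; ring_simplify; lra).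
    replace (Re (hinner (T x) x)) with (nsq x * (c * c * Re (hinner (T x) x))) by (transitivity ((c * c * nsq x) * Re (hinner (T x) x)); [ring|rewrite E; ring]).
    rewrite (Rmult_comm (rayleigh_sup L)). apply Rmult_le_compat_l; lra.
  - symmetry in Hx. apply nsq_zero_iff in Hx. subst x. rewrite compact_T_zero, nsq_hzero. autorewrite with ipsimp. lra.
Qed.

Lemma T_orth_to_list L x : (forall v, In v L -> is_eigvec v) -> orth_to_list L x -> orth_to_list L (T x).
Proof.
  intros He Ho v Hv. destruct (He v Hv) as [c Hc]. rewrite (T_adj T compact_linear hp), Hc.
  specialize (Ho v Hv). apply C_ext; autorewrite with ipsimp; rewrite Ho; simpl; ring.
Qed.

(* On L-perp, ||Tx||^2 <= M^2 ||x||^2 (combine T_norm4 with the Rayleigh bound). *)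
Lemma rayleigh_sup_norm_bound L x : (forall v, In v L -> is_eigvec v) -> orth_to_list L x -> nsq (T x) <= rayleigh_sup L * rayleigh_sup L * nsq x.
Proof.
  intros He Ho. pose proof (T_norm4 T compact_linear hp x) as N4.
  pose proof (rayleigh_sup_bound L x Ho) as V1. pose proof (rayleigh_sup_bound L (T x) (T_orth_to_list L x He Ho)) as V2.
  pose proof (rayleigh_sup_nonneg L). pose proof (nsq_nonneg x). pose proof (nsq_nonneg (T x)).
  destruct (hp x) as [_ P1]. destruct (hp (T x)) as [_ P2].
  destruct (Rle_lt_or_eq_dec 0 (nsq (T x)) ltac:(auto)) as [Hp|Hz]; [|rewrite <- Hz; nra].
  assert (nsq (T x) * nsq (T x) <= rayleigh_sup L * nsq x * (rayleigh_sup L * nsq (T x))).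
  { eapply Rle_trans; [exact N4|]. apply Rmult_le_compat; auto. }
  apply (Rmult_le_reg_r (nsq (T x))); auto. nra.
Qed.

Lemma maximizing_sequence L : exists xs : nat -> H, forall n,
  nsq (xs n) <= 1 /\ orth_to_list L (xs n) /\ rayleigh_sup L - / INR (S n) < Re (hinner (T (xs n)) (xs n)).
Proof.
  apply (choice (fun (n : nat) (x : H) =>
    nsq x <= 1 /\ orth_to_list L x /\ rayleigh_sup L - / INR (S n) < Re (hinner (T x) x))).
  intro n. apply NNPP; intro C. destruct (rayleigh_sup_lub L) as [U Lb].
  assert (UB : is_upper_bound (rayleigh_values L) (rayleigh_sup L - / INR (S n))).
  { intros r [x [h1 [h2 ->]]]. apply Rnot_lt_le. intro Hlt. apply C. exists x; auto. }
  specialize (Lb _ UB). pose proof (Rinv_0_lt_compat (INR (S n)) (lt_0_INR _ (Nat.lt_0_succ n))). lra.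
Qed.

(* A near-maximizer is an approximate eigenvector:
   ||Tx - Mx||^2 = ||Tx||^2 + M^2 ||x||^2 - 2M<Tx,x> <= 2 M eps. *)
Lemma eigen_defect L x eps : (forall v, In v L -> is_eigvec v) -> nsq x <= 1 -> orth_to_list L x ->
  rayleigh_sup L - eps < Re (hinner (T x) x) ->
  nsq (hsub (T x) (hscal (RtoC (rayleigh_sup L)) x)) <= 2 * rayleigh_sup L * eps.
Proof.
  intros He h1 h2 h3. pose proof (rayleigh_sup_nonneg L) as M0.
  pose proof (rayleigh_sup_norm_bound L x He h2) as h4.
  rewrite nsq_sub, nsq_scal. simpl. autorewrite with ipsimp. simpl.
  set (M := rayleigh_sup L) in *. set (r := Re (hinner (T x) x)) in *. set (q := nsq x) in *.
  assert (M * M * q <= M * M) by (assert (0 <= M * M) by nra; nra).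
  nra.
Qed.

(* A maximizing sequence has,
   by compactness, a subsequence with T x_n -> y; the defect bound then forces
   x_n -> y / M. *)
Lemma rayleigh_maximizer L : (forall v, In v L -> is_eigvec v) -> 0 < rayleigh_sup L ->
  exists u, nsq u = 1 /\ orth_to_list L u /\ T u = hscal (RtoC (rayleigh_sup L)) u.
Proof.
  intros He HM. destruct (maximizing_sequence L) as [xs Hxs]. set (M := rayleigh_sup L) in *.
  destruct hc as [_ [_ Hcomp]].
  destruct (Hcomp xs) as [phi [Hphi [y Hy]]].
  { exists 1. intro n. destruct (Hxs n) as [h _]. unfold hnorm. rewrite <- sqrt_1. apply sqrt_le_1_alt; exact h. }
  assert (Hi : forall n, / INR (S (phi n)) <= / INR (S n)).
  { intro n. apply Rinv_le_contravar; [apply lt_0_INR; lia|]. apply le_INR. pose proof (strict_inc_ge phi Hphi n); lia. }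
  assert (Hdc : Un_cv (fun n => nsq (hsub (T (xs (phi n))) (hscal (RtoC M) (xs (phi n))))) 0).
  { apply (cv_squeeze0 _ (fun n => (2 * M) / INR (S n))); [|apply cv_c_over_n].
    intro n. split; [apply nsq_nonneg|]. destruct (Hxs (phi n)) as [h1 [h2 h3]].
    eapply Rle_trans; [apply (eigen_defect L _ _ He h1 h2 h3)|].
    unfold Rdiv. apply Rmult_le_compat_l; [lra|apply Hi]. }
  set (u := hscal (RtoC (/ M)) y).
  assert (Hxu : hconv (fun n => xs (phi n)) u) by (apply (approx_eigvec_limit T); auto).
  destruct (opbound_ex T compact_bounded) as [K HK].
  assert (HTu : T u = y).
  { apply (hconv_unique (fun n => T (xs (phi n)))); auto. apply (hconv_T T _ u K compact_linear HK Hxu). }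
  exists u. split; [|split].
  - apply Rle_antisym; [apply (Un_cv_le_const _ _ 1 (hconv_nsq _ _ Hxu)); intro n; apply (Hxs (phi n))|].
    apply (cv_ge_with_err _ (fun n => (/ M) / INR (S n)) _ 1 (hconv_nsq _ _ Hxu) (cv_c_over_n (/ M))).
    intro n. destruct (Hxs (phi n)) as [h1 [h2 h3]].
    pose proof (rayleigh_sup_bound L _ h2) as V. fold M in V. pose proof (Hi n).
    assert (E : M * (1 - / M / INR (S n)) = M - / INR (S n)) by (field; split; [apply not_0_INR; lia|lra]).
    apply (Rmult_le_reg_l M); [exact HM|lra].
  - intros v Hv. apply (inner_orth_lim _ u v Hxu). intro n. apply (Hxs (phi n)); auto.
  - rewrite HTu. unfold u. apply vec_ext; intro z. autorewrite with ipsimp. simpl. field. lra.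
Qed.

End Spectral.

(* The eigenvalue and eigenvector sequences of a compact positive T, obtained by
   iterating the Rayleigh maximizer on the complement of the previous eigenvectors. *)
Section Eigenvectors.
Context {H : SepHilbert}.
Implicit Types x y z : H.
Variable T : H -> H.
Hypothesis hc : hcompact T.
Hypothesis hp : hpositive T.

Definition top_eigvec_spec (L : list H) (u : H) :=
  (0 < rayleigh_sup T L -> nsq u = 1 /\ orth_to_list L u /\ T u = hscal (RtoC (rayleigh_sup T L)) u) /\
  (rayleigh_sup T L <= 0 -> u = hzero).

Definition top_eigvec (L : list H) : H := epsilon (inhabits hzero) (top_eigvec_spec L).

Lemma top_eigvec_exists L : (forall v, In v L -> is_eigvec T v) -> top_eigvec_spec L (top_eigvec L).
Proof.
  intro He. unfold top_eigvec. apply epsilon_spec.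
  destruct (Rlt_or_le 0 (rayleigh_sup T L)) as [Hp|Hn].
  - destruct (rayleigh_maximizer T hc hp L He Hp) as [u Hu]. exists u. split; auto. intro; lra.
  - exists hzero. split; auto. intro; lra.
Qed.

Fixpoint eigvec_list (n : nat) : list H :=
  match n with O => nil | S k => top_eigvec (eigvec_list k) :: eigvec_list k end.

Definition eigval n := rayleigh_sup T (eigvec_list n).
Definition eigvec n := top_eigvec (eigvec_list n).

Lemma eigvec_list_in n v : In v (eigvec_list n) <-> exists k, (k < n)%nat /\ v = eigvec k.
Proof.
  induction n; simpl; split.
  - intros [].
  - intros [k [Hk _]]; lia.
  - intros [E|I]. exists n; split; auto. apply IHn in I. destruct I as [k [Hk E]]. exists k; split; auto.
  - intros [k [Hk E]]. destruct (Nat.eq_dec k n). subst; left; auto. right. apply IHn. exists k; split; auto; lia.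
Qed.

Lemma zero_is_eigvec : is_eigvec T hzero.
Proof. exists 0. rewrite (compact_T_zero T hc), hscal_zero. auto. Qed.

Lemma eigvec_list_eig n : forall v, In v (eigvec_list n) -> is_eigvec T v.
Proof.
  induction n; simpl; [intros _ []|].
  intros v [E|I]; auto. subst v. destruct (top_eigvec_exists _ IHn) as [P1 P2].
  destruct (Rlt_or_le 0 (rayleigh_sup T (eigvec_list n))) as [Hp|Hn].
  - exists (rayleigh_sup T (eigvec_list n)). apply P1; auto.
  - rewrite (P2 Hn). apply zero_is_eigvec.
Qed.

Lemma eigvec_spec n : top_eigvec_spec (eigvec_list n) (eigvec n).
Proof. apply top_eigvec_exists, eigvec_list_eig. Qed.

Lemma eigval_nonneg n : 0 <= eigval n.
Proof. apply rayleigh_sup_nonneg; auto. Qed.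

Lemma eigvec_eq n : T (eigvec n) = hscal (RtoC (eigval n)) (eigvec n).
Proof.
  destruct (eigvec_spec n) as [P1 P2]. destruct (Rlt_or_le 0 (eigval n)) as [Pn|Zn].
  - apply P1; auto.
  - rewrite (P2 Zn), (compact_T_zero T hc), hscal_zero; auto.
Qed.

Lemma eigvec_zero n : eigval n <= 0 -> eigvec n = hzero.
Proof. apply eigvec_spec. Qed.

Lemma eigvec_unit n : 0 < eigval n -> nsq (eigvec n) = 1.
Proof. intro h. apply (eigvec_spec n); auto. Qed.

Lemma eigvec_orth_prev n k : (k < n)%nat -> hinner (eigvec n) (eigvec k) = C0.
Proof.
  intro Hk. destruct (eigvec_spec n) as [P1 P2]. destruct (Rlt_or_le 0 (eigval n)) as [Pn|Zn].
  - apply (P1 Pn). apply eigvec_list_in. exists k; auto.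
  - rewrite (P2 Zn). apply inner0l.
Qed.

Lemma eigvec_family : ortho_family eigvec.
Proof.
  split.
  - intros i j Hij. destruct (Nat.lt_total i j) as [L|[L|L]]; [|lia|].
    + rewrite hinner_conj, (eigvec_orth_prev j i ltac:(lia)). apply C_ext; simpl; ring.
    + apply eigvec_orth_prev; lia.
  - intro i. destruct (Rlt_or_le 0 (eigval i)) as [Pi|Zi].
    + right. apply C_ext; [apply eigvec_unit; auto|apply Im_self].
    + left. rewrite (eigvec_zero i Zi). apply inner0l.
Qed.

(* Eigenvalues are nonincreasing (the constraint sets shrink). *)
Lemma eigval_decr n : eigval (S n) <= eigval n.
Proof.
  unfold eigval. destruct (rayleigh_sup_lub T hc (eigvec_list (S n))) as [_ Lb]. apply Lb.
  intros r [x [h1 [h2 ->]]]. destruct (rayleigh_sup_lub T hc (eigvec_list n)) as [U _]. apply U.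
  exists x. split; auto. split; auto. intros v Hv. apply h2. simpl; right; auto.
Qed.

Lemma eigval_antitone n m : (n <= m)%nat -> eigval m <= eigval n.
Proof. intro Hnm; induction Hnm; [lra|]. pose proof (eigval_decr m); lra. Qed.

Lemma eigval_rayleigh n x : (forall k, (k < n)%nat -> hinner x (eigvec k) = C0) -> Re (hinner (T x) x) <= eigval n * nsq x.
Proof.
  intro Ho. apply (rayleigh_sup_bound T hc). intros v Hv. apply eigvec_list_in in Hv. destruct Hv as [k [Hk ->]]. auto.
Qed.

(* Eigenvalues tend to 0: otherwise the unit eigenvectors, pairwise orthogonal,
   would have images T u_k = lam_k u_k at mutual distance >= eps, contradicting compactness. *)
Lemma eigval_small eps : 0 < eps -> exists N, eigval N < eps.
Proof.
  intro He. apply NNPP; intro C.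
  assert (All : forall N, eps <= eigval N) by (intro N; apply Rnot_lt_le; intro; apply C; exists N; auto).
  destruct hc as [hl [hb Hcomp]].
  destruct (Hcomp eigvec) as [phi [Hphi [y Hy]]].
  { exists 1. intro n. unfold hnorm. fold (nsq (eigvec n)). rewrite eigvec_unit; [rewrite sqrt_1; lra|]. pose proof (All n); lra. }
  destruct (Hy (eps / 2)) as [N HN]; [lra|].
  pose proof (HN N (le_n _)) as A1. pose proof (HN (S N) (le_S _ _ (le_n _))) as A2.
  pose proof (hnorm_sub_triangle (T (eigvec (phi N))) y (T (eigvec (phi (S N))))) as Tr.
  rewrite (hsub_sym_norm y) in Tr.
  assert (Hlt : hnorm (hsub (T (eigvec (phi N))) (T (eigvec (phi (S N))))) < eps) by lra.
  apply nsq_lt_hnorm in Hlt; [|lra].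
  rewrite !eigvec_eq, nsq_sub, !nsq_scal in Hlt. simpl in Hlt.
  set (a := phi N) in *. set (b := phi (S N)) in *.
  assert (Hab : (a < b)%nat) by (apply Hphi).
  rewrite hinner_scal_l in Hlt.
  assert (E0 : hinner (eigvec a) (hscal (RtoC (eigval b)) (eigvec b)) = C0).
  { apply C_ext; autorewrite with ipsimp; rewrite hinner_conj, (eigvec_orth_prev b a Hab); simpl; ring. }
  rewrite E0 in Hlt. simpl in Hlt.
  rewrite (eigvec_unit a), (eigvec_unit b) in Hlt by (pose proof (All a); pose proof (All b); lra).
  pose proof (All a). pose proof (All b). nra.
Qed.

(* A vector orthogonal to all eigenvectors is in the kernel of T (since <Tx,x> <=
   eigval n ||x||^2 for every n). *)
Lemma eigvec_kernel x : (forall k, hinner x (eigvec k) = C0) -> T x = hzero.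
Proof.
  intro Ho. apply (T_ker T (compact_linear T hc) hp). apply Rnot_lt_le. intro Hpos.
  set (q := Re (hinner (T x) x)) in *.
  destruct (eigval_small (q / (nsq x + 1))) as [N HN].
  { pose proof (nsq_nonneg x). apply Rdiv_lt_0_compat; lra. }
  pose proof (eigval_rayleigh N x (fun k _ => Ho k)) as V. fold q in V.
  pose proof (nsq_nonneg x). pose proof (eigval_nonneg N).
  assert (eigval N * nsq x <= q / (nsq x + 1) * nsq x) by (apply Rmult_le_compat_r; lra).
  assert (q / (nsq x + 1) * nsq x < q).
  { apply (Rmult_lt_reg_r (nsq x + 1)); [lra|].
    replace (q / (nsq x + 1) * nsq x * (nsq x + 1)) with (q * nsq x) by (field; lra). nra. }
  lra.
Qed.

End Eigenvectors.

Fixpoint count_upto (P : nat -> Prop) (N : nat) : nat :=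
  match N with O => O | S n => (count_upto P n + if excluded_middle_informative (P n) then 1 else 0)%nat end.

Definition injective_below (g : nat -> nat) k := forall i j, (i < k)%nat -> (j < k)%nat -> g i = g j -> i = j.

Lemma count_upto_enum P N k : (k <= count_upto P N)%nat ->
  exists g, injective_below g k /\ forall i, (i < k)%nat -> P (g i) /\ (g i < N)%nat.
Proof.
  revert k. induction N; intros k Hk; simpl in Hk.
  - exists (fun i => i). split. intros i j _ _ E; auto. intros; lia.
  - destruct (excluded_middle_informative (P N)) as [HP|HP].
    + destruct (le_lt_dec k (count_upto P N)) as [Hl|Hl].
      * destruct (IHN k Hl) as [g [Hi Hg]]. exists g. split; auto. intros i Hik; destruct (Hg i Hik); split; auto.
      * destruct (IHN (k - 1)%nat ltac:(lia)) as [g [Hi Hg]].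
        exists (fun i => if Nat.eqb i (k - 1) then N else g i). split.
        -- intros i j Hi' Hj' E. destruct (Nat.eqb_spec i (k-1)), (Nat.eqb_spec j (k-1)); try lia.
           ++ pose proof (Hg j ltac:(lia)); lia.
           ++ pose proof (Hg i ltac:(lia)); lia.
           ++ apply Hi; auto; lia.
        -- intros i Hik. destruct (Nat.eqb_spec i (k-1)). split; auto. destruct (Hg i ltac:(lia)); split; auto.
    + rewrite Nat.add_0_r in Hk. destruct (IHN k Hk) as [g [Hi Hg]]. exists g. split; auto.
      intros i Hik; destruct (Hg i Hik); split; auto.
Qed.

Lemma count_upto_bound P N : forall k g, injective_below g k -> (forall i, (i < k)%nat -> P (g i) /\ (g i < N)%nat) -> (k <= count_upto P N)%nat.
Proof.
  induction N; intros k g Hi Hg.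
  - destruct k; [lia|]. destruct (Hg O ltac:(lia)); lia.
  - simpl. destruct (classic (exists i0, (i0 < k)%nat /\ g i0 = N)) as [[i0 [Hi0 E0]]|NE].
    + assert (HP : P N) by (rewrite <- E0; apply Hg; auto).
      destruct (excluded_middle_informative (P N)) as [_|C]; [|contradiction].
      set (g' := fun i => if Nat.eqb i i0 then g (k - 1)%nat else g i).
      assert (Hk : (k - 1 <= count_upto P N)%nat).
      { apply (IHN _ g').
        - intros i j Hi' Hj' E. unfold g' in E. destruct (Nat.eqb_spec i i0), (Nat.eqb_spec j i0); try lia.
          + apply Hi in E; lia.
          + apply Hi in E; lia.
          + apply Hi; auto; lia.
        - intros i Hik. unfold g'. destruct (Nat.eqb_spec i i0).
          + destruct (Hg (k-1)%nat ltac:(lia)). split; auto.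
            assert (g (k-1)%nat <> N). { intro E. rewrite <- E0 in E. apply Hi in E; lia. } lia.
          + destruct (Hg i ltac:(lia)). split; auto.
            assert (g i <> N). { intro E. rewrite <- E0 in E. apply Hi in E; lia. } lia. }
      lia.
    + assert (k <= count_upto P N)%nat.
      { apply (IHN k g Hi). intros i Hik. destruct (Hg i Hik). split; auto.
        assert (g i <> N) by (intro E; apply NE; exists i; auto). lia. }
      lia.
Qed.

Lemma count_upto_INR P N : INR (count_upto P N) = rsum N (fun j => if excluded_middle_informative (P j) then 1 else 0).
Proof.
  induction N; simpl; auto. rewrite plus_INR, IHN. destruct (excluded_middle_informative (P N)); simpl; ring.
Qed.

Definition takes_value (lam : nat -> R) mu k := exists g, injective_below g k /\ forall i, (i < k)%nat -> lam (g i) = mu.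

Lemma takes_value_le (l1 l2 : nat -> R) n :
  (forall m, 0 <= l2 m) -> (forall m, l2 (S m) <= l2 m) ->
  (forall mu k, 0 < mu -> takes_value l1 mu k -> takes_value l2 mu k) ->
  (forall m, (m < n)%nat -> l1 m = l2 m) -> l1 n <= l2 n.
Proof.
  intros P2 D2 Hg Hpre. apply Rnot_lt_le. intro Hlt. set (mu := l1 n).
  assert (Hmu : 0 < mu) by (pose proof (P2 n); unfold mu; lra).
  set (P := fun j => l1 j = mu).
  set (k := count_upto P (S n)).
  destruct (count_upto_enum P (S n) k (le_n _)) as [g [Hi Hgp]].
  destruct (Hg mu k Hmu) as [g' [Hi' Hg']]. { exists g. split; auto. intros i Hik. apply Hgp; auto. }
  assert (Hb : (k <= count_upto P n)%nat).
  { apply (count_upto_bound P n k g' Hi'). intros i Hik. specialize (Hg' i Hik).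
    assert (Hlt2 : (g' i < n)%nat).
    { destruct (le_lt_dec n (g' i)); auto. exfalso.
      assert (l2 (g' i) <= l2 n) by (clear - D2 l; induction l; [lra|]; pose proof (D2 m); lra).
      unfold mu in Hg'. lra. }
    split; auto. unfold P. rewrite Hpre; auto. }
  unfold k in Hb. simpl in Hb. destruct (excluded_middle_informative (P n)) as [_|C]; [lia|].
  apply C; reflexivity.
Qed.

Lemma takes_value_unique (l1 l2 : nat -> R) :
  (forall m, 0 <= l1 m) -> (forall m, l1 (S m) <= l1 m) ->
  (forall m, 0 <= l2 m) -> (forall m, l2 (S m) <= l2 m) ->
  (forall mu k, 0 < mu -> (takes_value l1 mu k <-> takes_value l2 mu k)) -> forall n, l1 n = l2 n.
Proof.
  intros P1 D1 P2 D2 Hg n. induction n as [n IH] using lt_wf_ind.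
  apply Rle_antisym.
  - apply (takes_value_le l1 l2 n P2 D2); auto. intros mu k Hm; apply Hg; auto.
  - apply (takes_value_le l2 l1 n P1 D1); auto. intros mu k Hm; apply Hg; auto.
    intros m Hm; symmetry; auto.
Qed.

Section SingularValues.
Context {H : SepHilbert}.
Implicit Types x y z : H.

Definition eigen_family (S : H -> H) mu k := exists v : nat -> H,
  (forall i j, (i < k)%nat -> (j < k)%nat -> hinner (v i) (v j) = if Nat.eqb i j then C1 else C0) /\
  (forall i, (i < k)%nat -> S (v i) = hscal (RtoC mu) (v i)).

Lemma eig_equiv (S T : H -> H) mu v : hlinear S -> hpositive S -> hlinear T -> hpositive T -> 0 < mu ->
  (forall x, S (S x) = T (T x)) -> (S v = hscal (RtoC mu) v <-> T v = hscal (RtoC mu) v).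
Proof.
  intros hlS hpS hlT hpT Hmu E. split; intro Hv.
  - apply (sq_eig T v mu hlT hpT Hmu). rewrite <- E, Hv, (T_scal S hlS), Hv, scal_scal_R; auto.
  - apply (sq_eig S v mu hlS hpS Hmu). rewrite E, Hv, (T_scal T hlT), Hv, scal_scal_R; auto.
Qed.

Lemma eigen_family_equiv (S T : H -> H) mu k : hlinear S -> hpositive S -> hlinear T -> hpositive T -> 0 < mu ->
  (forall x, S (S x) = T (T x)) -> (eigen_family S mu k <-> eigen_family T mu k).
Proof.
  intros hlS hpS hlT hpT Hmu E. split; intros [v [Ho He]]; exists v; split; auto; intros i Hi.
  - apply (eig_equiv S T mu (v i)); auto.
  - apply (eig_equiv S T mu (v i)); auto.
Qed.

Lemma SqSq_eq (S T : H -> H) : hlinear T -> hpositive T ->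
  (forall x y, hinner (S (S x)) y = hinner (T x) (T y)) -> forall x, S (S x) = T (T x).
Proof.
  intros hl hp E x. apply vec_ext; intro z. rewrite E, <- (T_adj T hl hp). reflexivity.
Qed.

(* For positive T the singular values are characterized through the eigenvalues
   of T itself (T is its own square root). *)
Lemma singular_values_iff (T : H -> H) lam : positive_bounded_op T ->
  (singular_values T lam <->
   ((forall n, 0 <= lam n) /\ (forall n, lam (S n) <= lam n) /\
    forall mu, 0 < mu -> forall k, eigen_family T mu k <-> takes_value lam mu k)).
Proof.
  intros [hl [hb hp]]. split.
  - intros [Sq [[hlS [hbS hpS]] [E [P1 [P2 P3]]]]]. split; auto. split; auto.
    intros mu Hmu k. rewrite <- (eigen_family_equiv Sq T mu k hlS hpS hl hp Hmu (SqSq_eq Sq T hl hp E)).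
    apply P3; auto.
  - intros [P1 [P2 P3]]. exists T. split; [exact (conj hl (conj hb hp))|]. split.
    + intros x y. rewrite (T_adj T hl hp). reflexivity.
    + split; [auto|]. split; [auto|]. intros mu Hmu k. apply P3; auto.
Qed.

Section Multiplicity.
Variable T : H -> H.
Hypothesis hc : hcompact T.
Hypothesis hp : hpositive T.

(* An eigenvector for mu > 0 lies in the span of the eigenvectors eigvec j, j < N,
   as soon as eigval N < mu: its residual is an eigenvector for mu orthogonal to
   all eigvec j, hence killed by T, hence zero. *)
Lemma eigvec_in_span v mu N : 0 < mu -> T v = hscal (RtoC mu) v -> eigval T N < mu ->
  rsum N (fun j => Cnorm2 (hinner v (eigvec T j))) = nsq v.
Proof.
  intros Hmu Hev HN. set (u := eigvec T). set (lam := eigval T).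
  assert (Og : ortho_family u) by (apply eigvec_family; auto).
  assert (Ortho : forall j, lam j <> mu -> hinner v (u j) = C0).
  { intros j Hj. apply (eig_orth T (compact_linear T hc) hp v (u j) mu (lam j)); auto.
    apply (eigvec_eq T hc hp). }
  set (w := hsub v (proj u N v)).
  assert (Ow : forall j, hinner w (u j) = C0).
  { intro j. destruct (le_lt_dec N j) as [Hj|Hj]; [|apply resid_orth; auto].
    assert (O1 : hinner v (u j) = C0).
    { apply Ortho. pose proof (eigval_antitone T hc N j Hj). unfold lam; lra. }
    assert (O2 : hinner (proj u N v) (u j) = C0).
    { unfold proj. rewrite sum_inner_u; auto. destruct (Nat.ltb_spec j N); auto; lia. }
    unfold w. apply C_ext; autorewrite with ipsimp; rewrite O1, O2; simpl; ring. }
  assert (Tp : T (proj u N v) = hscal (RtoC mu) (proj u N v)).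
  { rewrite (T_proj T (compact_linear T hc) u lam (eigvec_eq T hc hp)). unfold proj. rewrite hscal_hsum.
    apply hsum_ext. intros j Hj. rewrite hscal_assoc. f_equal.
    destruct (Req_dec (lam j) mu) as [E|NE]; [rewrite E|rewrite (Ortho j NE)]; apply C_ext; simpl; ring. }
  assert (Tw : T w = hscal (RtoC mu) w).
  { unfold w. rewrite (T_sub T (compact_linear T hc)), Hev, Tp. apply hsub_scal. }
  assert (W0 : nsq w = 0).
  { pose proof (eigvec_kernel T hc hp w Ow) as Z. rewrite Tw in Z. apply (f_equal nsq) in Z.
    rewrite nsq_scal, nsq_hzero in Z. simpl in Z. pose proof (nsq_nonneg w).
    assert (0 < mu * mu + 0 * 0) by nra. nra. }
  unfold w in W0. rewrite nsq_resid in W0; auto. lra.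
Qed.

(* k orthonormal eigenvectors for mu > 0 force at least k indices j < N with
   eigval j = mu (double counting with Bessel's inequality). *)
Lemma eigen_family_count mu k N : 0 < mu -> eigval T N < mu -> eigen_family T mu k ->
  (k <= count_upto (fun j => eigval T j = mu) N)%nat.
Proof.
  intros Hmu HN [v [Ho Hev]]. set (u := eigvec T). set (lam := eigval T).
  assert (Og : ortho_family u) by (apply eigvec_family; auto).
  assert (Hone : forall i, (i < k)%nat -> rsum N (fun j => Cnorm2 (hinner (v i) (u j))) = 1).
  { intros i Hi. unfold u. rewrite (eigvec_in_span (v i) mu N Hmu (Hev i Hi) HN).
    unfold nsq. rewrite (Ho i i Hi Hi), Nat.eqb_refl. reflexivity. }
  set (v' := fun i => if Nat.ltb i k then v i else hzero).
  assert (Ov : ortho_family v').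
  { split.
    - intros i j Hij. unfold v'. destruct (Nat.ltb_spec i k), (Nat.ltb_spec j k); try apply inner0l; try apply inner0r.
      rewrite Ho; auto. destruct (Nat.eqb_spec i j); [lia|auto].
    - intro i. unfold v'. destruct (Nat.ltb_spec i k). right. rewrite Ho, Nat.eqb_refl; auto.
      left; apply inner0l. }
  apply INR_le. rewrite count_upto_INR.
  replace (INR k) with (rsum k (fun i => rsum N (fun j => Cnorm2 (hinner (v i) (u j))))).
  2:{ rewrite (rsum_ext _ _ (fun _ => 1)). rewrite rsum_const; ring. intros; apply Hone; auto. }
  rewrite rsum_swap. apply rsum_le. intros j Hj. cbv beta.
  destruct (excluded_middle_informative (lam j = mu)) as [E|NE].
  - apply Rle_trans with (nsq (u j)).
    + rewrite (rsum_ext _ _ (fun i => Cnorm2 (hinner (u j) (v' i)))). apply bessel_fin; auto.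
      intros i Hi. unfold v'. destruct (Nat.ltb_spec i k); [|lia]. apply Cnorm2_sym.
    + unfold u. rewrite eigvec_unit; auto; [lra|unfold lam in E; lra].
  - rewrite (rsum_ext _ _ (fun _ => 0)). rewrite rsum_zero; lra.
    intros i Hi. rewrite (eig_orth T (compact_linear T hc) hp (v i) (u j) mu (lam j)); auto.
    unfold Cnorm2; simpl; ring. apply (eigvec_eq T hc hp).
Qed.

Lemma eigen_family_iff_takes_value mu k : 0 < mu -> (eigen_family T mu k <-> takes_value (eigval T) mu k).
Proof.
  intro Hmu. split.
  - intro Hf. destruct (eigval_small T hc hp mu Hmu) as [N HN].
    destruct (count_upto_enum _ N k (eigen_family_count mu k N Hmu HN Hf)) as [g [Hi Hg]].
    exists g. split; auto. intros i Hik. apply Hg; auto.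
  - intros [g [Hi Hg]]. exists (fun i => eigvec T (g i)). split.
    + intros i j Hik Hjk. destruct (Nat.eqb_spec i j).
      * subst j. apply C_ext; [|apply Im_self]. simpl. apply eigvec_unit; auto. rewrite Hg; auto.
      * apply (proj1 (eigvec_family T hc hp)). intro E. apply n. apply Hi; auto.
    + intros i Hik. rewrite (eigvec_eq T hc hp), Hg; auto.
Qed.

Lemma singular_values_eigval : positive_bounded_op T -> singular_values T (eigval T).
Proof.
  intro hpb. apply singular_values_iff; auto. split; [apply eigval_nonneg; auto|]. split; [apply eigval_decr; auto|].
  intros mu Hmu k. apply eigen_family_iff_takes_value; auto.
Qed.

Lemma singular_values_unique lam : positive_bounded_op T -> singular_values T lam -> forall n, lam n = eigval T n.
Proof.
  intros hpb Hs. apply singular_values_iff in Hs; auto. destruct Hs as [P1 [P2 P3]].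
  apply takes_value_unique; auto. apply eigval_nonneg; auto. apply eigval_decr; auto.
  intros mu k Hmu. rewrite <- P3, eigen_family_iff_takes_value; auto. reflexivity.
Qed.

End Multiplicity.

End SingularValues.

(* 1 + z <= exp z, the source of the concavity of t |-> t^p for 0 < p <= 1. *)
Lemma exp_ge1z z : 1 + z <= exp z.
Proof. destruct (Req_dec z 0) as [->|Hz]. rewrite exp_0; lra. left; apply exp_ineq1; auto. Qed.

Lemma rpower_bernoulli p r : 0 < p <= 1 -> 0 < r -> Rpower r p <= 1 + p * (r - 1).
Proof.
  intros Hp Hr. unfold Rpower. set (X := ln r).
  assert (Er : exp X = r) by (unfold X; apply exp_ln; auto).
  pose proof (exp_ge1z (X - p * X)) as E1. pose proof (exp_ge1z (- (p * X))) as E2.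
  assert (K : 1 <= p * exp (X - p * X) + (1 - p) * exp (- (p * X))) by nra.
  assert (E3 : exp (X - p * X) = exp X * exp (- (p * X))) by (rewrite <- exp_plus; f_equal; ring).
  rewrite E3 in K. pose proof (exp_pos (p * X)).
  assert (E4 : exp (p * X) * exp (- (p * X)) = 1) by (rewrite <- exp_plus, Rplus_opp_r, exp_0; auto).
  assert (Hm : exp (p * X) <= exp (p * X) * (p * (exp X * exp (- (p * X))) + (1 - p) * exp (- (p * X)))).
  { rewrite <- (Rmult_1_r (exp (p * X))) at 1. apply Rmult_le_compat_l; lra. }
  replace (exp (p * X) * (p * (exp X * exp (- (p * X))) + (1 - p) * exp (- (p * X))))
    with ((exp (p * X) * exp (- (p * X))) * (p * exp X + (1 - p))) in Hm by ring.
  rewrite E4, Er in Hm. lra.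
Qed.

Lemma Rpower_pos x y : 0 < Rpower x y.
Proof. apply exp_pos. Qed.

Lemma Rpower_m1 m p : 0 < m -> Rpower m (p - 1) * m = Rpower m p.
Proof.
  intro Hm. rewrite <- (Rpower_1 m) at 2 by auto. rewrite <- Rpower_plus. f_equal; ring.
Qed.

Lemma rpow_pos x p : 0 < x -> rpow x p = Rpower x p.
Proof. intro Hx. unfold rpow. destruct (Rle_dec x 0); [lra|auto]. Qed.
Lemma rpow_nonpos x p : x <= 0 -> rpow x p = 0.
Proof. intro Hx. unfold rpow. destruct (Rle_dec x 0); [auto|lra]. Qed.

Lemma rpow_nonneg x p : 0 <= rpow x p.
Proof. unfold rpow. destruct (Rle_dec x 0); [lra|left; apply Rpower_pos]. Qed.

Lemma rpow_tangent_bound p t m : 0 < p <= 1 -> 0 <= t -> 0 < m ->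
  rpow t p <= Rpower m p + p * Rpower m (p - 1) * (t - m).
Proof.
  intros Hp Ht Hm. pose proof (Rpower_m1 m p Hm) as E. pose proof (Rpower_pos m (p - 1)).
  destruct (Rle_lt_or_eq_dec 0 t Ht) as [Htp|Ht0].
  - rewrite rpow_pos by auto.
    pose proof (rpower_bernoulli p (t / m) Hp (Rdiv_lt_0_compat _ _ Htp Hm)) as B.
    assert (Et : Rpower t p = Rpower (t / m) p * Rpower m p).
    { rewrite Rpower_mult_distr; [|apply Rdiv_lt_0_compat; auto|auto]. f_equal. field. lra. }
    rewrite Et. pose proof (Rpower_pos m p).
    apply Rle_trans with ((1 + p * (t / m - 1)) * Rpower m p). apply Rmult_le_compat_r; lra.
    rewrite <- E. right. field. lra.
  - subst t. rewrite rpow_nonpos by lra. rewrite <- E.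
    replace (Rpower m (p - 1) * m + p * Rpower m (p - 1) * (0 - m)) with ((Rpower m (p - 1) * m) * (1 - p)) by ring.
    apply Rmult_le_pos; [|lra]. apply Rmult_le_pos; lra.
Qed.

Lemma rpower_ratio_identity p S W : 0 < S -> 0 < W ->
  Rpower (S / W) p * W = Rpower W (1 - p) * rpow S p.
Proof.
  intros Sp W0. rewrite rpow_pos by auto.
  assert (E4 : Rpower (S / W) p * Rpower W p = Rpower S p).
  { rewrite Rpower_mult_distr; [f_equal; field; lra|apply Rdiv_lt_0_compat; auto|auto]. }
  assert (E5 : Rpower W (1 - p) * Rpower W p = W).
  { rewrite <- Rpower_plus. replace (1 - p + p) with 1 by ring. apply Rpower_1; auto. }
  transitivity (Rpower (S / W) p * (Rpower W (1 - p) * Rpower W p)); [rewrite E5; auto|].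
  rewrite <- E4; ring.
Qed.

Lemma concave_sum_zero p n (w a : nat -> R) : (forall j, 0 <= w j) -> (forall j, 0 <= a j) ->
  rsum n (fun j => w j * a j) <= 0 -> rsum n (fun j => w j * rpow (a j) p) <= 0.
Proof.
  intros Hw Ha HS. apply Rle_trans with (rsum n (fun _ => 0)); [|rewrite rsum_zero; lra].
  apply rsum_le. intros j Hj.
  assert (Z : w j * a j = 0).
  { pose proof (rsum_term_le n (fun j => w j * a j) j (fun k => Rmult_le_pos _ _ (Hw k) (Ha k)) Hj).
    pose proof (Rmult_le_pos _ _ (Hw j) (Ha j)). simpl in *. lra. }
  destruct (Rmult_integral _ _ Z) as [Z1|Z1]; rewrite Z1; [lra|rewrite rpow_nonpos by lra; lra].
Qed.

Lemma concave_weighted_sum p n (w a : nat -> R) W S : 0 < p <= 1 -> (forall j, 0 <= w j) -> (forall j, 0 <= a j) ->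
  rsum n w <= W -> 0 < W -> rsum n (fun j => w j * a j) <= S ->
  rsum n (fun j => w j * rpow (a j) p) <= Rpower W (1 - p) * rpow S p.
Proof.
  intros Hp Hw Ha HW W0 HS.
  assert (S0 : 0 <= S) by (eapply Rle_trans; [|exact HS]; apply rsum_nonneg; intros; apply Rmult_le_pos; auto).
  destruct (Rle_lt_or_eq_dec 0 S S0) as [Sp|Sz].
  - set (m := S / W). assert (Hm : 0 < m) by (apply Rdiv_lt_0_compat; auto).
    assert (T1 : rsum n (fun j => w j * rpow (a j) p) <=
                 rsum n (fun j => w j * (Rpower m p + p * Rpower m (p - 1) * (a j - m)))).
    { apply rsum_le. intros j _. apply Rmult_le_compat_l; auto. apply rpow_tangent_bound; auto. }
    assert (E1 : rsum n (fun j => w j * (Rpower m p + p * Rpower m (p - 1) * (a j - m))) =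
                 Rpower m p * rsum n w + p * Rpower m (p - 1) * (rsum n (fun j => w j * a j) - m * rsum n w)).
    { rewrite (rsum_ext _ _ (fun j => (Rpower m p * w j + (p * Rpower m (p-1)) * (w j * a j)) + (- (p * Rpower m (p-1) * m)) * w j)) by (intros; ring).
      rewrite !rsum_plus, !rsum_scal. ring. }
    rewrite E1 in T1.
    pose proof (Rpower_pos m (p - 1)). pose proof (Rpower_pos m p).
    assert (T2 : p * Rpower m (p - 1) * (rsum n (fun j => w j * a j) - m * rsum n w) <=
                 p * Rpower m (p - 1) * (S - m * rsum n w)) by (apply Rmult_le_compat_l; nra).
    assert (E2 : Rpower m (p - 1) * S = Rpower m p * W).
    { rewrite <- (Rpower_m1 m p Hm). unfold m. field. lra. }
    assert (T3 : Rpower m p * rsum n w + p * Rpower m (p - 1) * (S - m * rsum n w) <= Rpower m p * W).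
    { replace (Rpower m p * rsum n w + p * Rpower m (p - 1) * (S - m * rsum n w))
        with (Rpower m p * rsum n w + p * (Rpower m (p - 1) * S) - p * (Rpower m (p - 1) * m) * rsum n w) by ring.
      rewrite E2, Rpower_m1 by auto.
      assert (0 <= (Rpower m p * (1 - p)) * (W - rsum n w)) by (apply Rmult_le_pos; nra).
      nra. }
    pose proof (rpower_ratio_identity p S W Sp W0) as E3. fold m in E3. lra.
  - subst S. rewrite rpow_nonpos, Rmult_0_r by lra. apply concave_sum_zero; auto.
Qed.

Lemma hnorm_Rpower (W : R) p : 0 < W -> Rpower (sqrt W) (2 * (1 - p)) = Rpower W (1 - p).
Proof. intro HW. rewrite <- Rpower_sqrt by auto. rewrite Rpower_mult. f_equal. field. Qed.

Lemma quad_le_rpow p R0 D : 0 < p <= 1 -> 0 <= R0 <= D -> 0 < D -> R0 <= Rpower D (1 - p) * rpow R0 p.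
Proof.
  intros Hp HR HD. destruct (Rle_lt_or_eq_dec 0 R0 (proj1 HR)) as [Rp|Rz].
  - rewrite rpow_pos by auto.
    assert (E : R0 = Rpower R0 p * Rpower R0 (1 - p)).
    { rewrite <- Rpower_plus. replace (p + (1 - p)) with 1 by ring. rewrite Rpower_1; auto. }
    rewrite E at 1. rewrite Rmult_comm. apply Rmult_le_compat_r. left; apply Rpower_pos.
    apply Rle_Rpower_l; lra.
  - subst R0. rewrite rpow_nonpos by lra. lra.
Qed.

Section Lower.
Context {H : SepHilbert}.
Implicit Types x y z : H.
Variable T : H -> H.
Hypothesis hc : hcompact T.
Hypothesis hp : hpositive T.
Variable p : R.
Hypothesis Hp : 0 < p <= 1.

Lemma hnorm_zero_eq x : hnorm x = 0 -> x = hzero.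
Proof. intro Z. apply nsq_zero_iff. rewrite <- hnorm_sq, Z; ring. Qed.

Lemma hnorm_pos x : hnorm x <> 0 -> 0 < nsq x.
Proof.
  intro NZ. destruct (Rle_lt_or_eq_dec 0 (nsq x) (nsq_nonneg x)); auto.
  exfalso; apply NZ. unfold hnorm. fold (nsq x). rewrite <- e. apply sqrt_0.
Qed.

Lemma weighted_nonneg x : 0 <= weighted_term p T x.
Proof.
  unfold weighted_term. destruct (Req_EM_T (hnorm x) 0); [lra|].
  apply Rmult_le_pos; [left; apply Rpower_pos|apply rpow_nonneg].
Qed.

Lemma weighted_pos_form x : hnorm x <> 0 ->
  weighted_term p T x = Rpower (nsq x) (1 - p) * rpow (Re (hinner (T x) x)) p.
Proof.
  intro NZ. unfold weighted_term. destruct (Req_EM_T (hnorm x) 0); [contradiction|].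
  unfold hnorm at 1. fold (nsq x). rewrite hnorm_Rpower; auto. apply hnorm_pos; auto.
Qed.

(* Jensen applied to the spectral measure of x: with weights |<x,u_j>|^2 (total
   mass <= ||x||^2 by Bessel) sum_j eigval_j^p |<x,u_j>|^2 <= weighted_term x. *)
Lemma weighted_term_lower x J :
  rsum J (fun j => rpow (eigval T j) p * Cnorm2 (hinner x (eigvec T j))) <= weighted_term p T x.
Proof.
  destruct (Req_EM_T (hnorm x) 0) as [Z|NZ].
  - apply hnorm_zero_eq in Z. subst x. rewrite (rsum_ext _ _ (fun _ => 0)), rsum_zero.
    apply weighted_nonneg. intros k _. rewrite inner0l. unfold Cnorm2; simpl; ring.
  - rewrite weighted_pos_form by auto.
    rewrite (rsum_ext _ _ (fun j => Cnorm2 (hinner x (eigvec T j)) * rpow (eigval T j) p)) by (intros; ring).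
    apply concave_weighted_sum; auto.
    + intro; apply Cnorm2_nonneg.
    + intro; apply eigval_nonneg; auto.
    + apply bessel_fin. apply eigvec_family; auto.
    + apply hnorm_pos; auto.
    + rewrite (rsum_ext _ _ (fun j => eigval T j * Cnorm2 (hinner x (eigvec T j)))) by (intros; ring).
      apply (eig_bessel T (compact_linear T hc) hp (eigvec T) (eigval T) (eigvec_family T hc hp) (eigvec_eq T hc hp)).
Qed.

(* Summing weighted_term_lower over the family and exchanging sums: each partial sum
   of eigval_j^p, weighted by the lower frame bound A, is at most the weighted sum. *)
Lemma frame_lower_partial (f : nat -> H) A Stot : 0 < A ->
  lower_frame_ineq f A ->
  infinite_sum (fun n => weighted_term p T (f n)) Stot ->
  forall J, A * rsum J (fun j => rpow (eigval T j) p) <= Stot.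
Proof.
  intros HA Hfr HS J.
  destruct (choice (fun j F => infinite_sum (frame_sum f (eigvec T j)) F /\ A * nsq (eigvec T j) <= F)
    (fun j => Hfr (eigvec T j))) as [F HF].
  assert (Ser : infinite_sum (fun n => rsum J (fun j => rpow (eigval T j) p * Cnorm2 (hinner (f n) (eigvec T j))))
                             (rsum J (fun j => rpow (eigval T j) p * F j))).
  { apply (series_finsum J (fun n j => rpow (eigval T j) p * Cnorm2 (hinner (f n) (eigvec T j)))).
    intros j _. apply series_scal. eapply series_ext; [|apply (HF j)].
    intro n; unfold frame_sum; apply Cnorm2_sym. }
  assert (L1 : rsum J (fun j => rpow (eigval T j) p * F j) <= Stot).
  { eapply series_le_compare; [|exact Ser|exact HS]. intro n. apply weighted_term_lower. }
  eapply Rle_trans; [|exact L1]. rewrite <- rsum_scal. apply rsum_le. intros j _.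
  destruct (Rle_lt_or_eq_dec 0 (eigval T j) (eigval_nonneg T hc j)) as [Pj|Zj].
  - destruct (HF j) as [_ HA2]. rewrite eigvec_unit in HA2 by auto.
    pose proof (rpow_nonneg (eigval T j) p). nra.
  - rewrite <- Zj, rpow_nonpos by lra. lra.
Qed.

Lemma frame_lower_summable (f : nat -> H) A Stot : 0 < A ->
  lower_frame_ineq f A ->
  infinite_sum (fun n => weighted_term p T (f n)) Stot ->
  exists s, infinite_sum (fun j => rpow (eigval T j) p) s /\ A * s <= Stot.
Proof.
  intros HA Hfr HS. destruct (series_exists (fun j => rpow (eigval T j) p) (Stot / A)) as [s [Hs Hb]].
  - intro; apply rpow_nonneg.
  - intro N. pose proof (frame_lower_partial f A Stot HA Hfr HS N). apply (Rmult_le_reg_l A); auto.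
    replace (A * (Stot / A)) with Stot by (field; lra). auto.
  - exists s. split; auto. apply (Rmult_le_compat_l A) in Hb; [|lra].
    replace (A * (Stot / A)) with Stot in Hb by (field; lra). auto.
Qed.

End Lower.

Section ProjectionLimit.
Context {H : SepHilbert}.
Implicit Types x y z : H.

Lemma hconv_Im_r (u : nat -> H) l z : hconv u l -> Un_cv (fun n => Im (hinner z (u n))) (Im (hinner z l)).
Proof.
  intro Hu. rewrite (Im_sym l z). pose proof (hconv_Im u l z Hu) as C.
  assert (C2 : Un_cv (fun n => - Im (hinner (u n) z)) (- Im (hinner l z))) by (apply CV_opp; auto).
  eapply Un_cv_ext; [|exact C2]. intro n; simpl. rewrite (Im_sym z (u n)). ring.
Qed.

Lemma Re_proj_proj (u : nat -> H) N M x : ortho_family u -> (N <= M)%nat ->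
  Re (hinner (proj u M x) (proj u N x)) = rsum N (fun j => Cnorm2 (hinner x (u j))).
Proof.
  intros O HNM. unfold proj at 2. rewrite Re_hsumr. apply rsum_ext. intros k Hk.
  rewrite Re_scalr, (proj_inner_u u M x k O ltac:(lia)). unfold Cnorm2; ring.
Qed.

Lemma nsq_proj_diff (u : nat -> H) N M x : ortho_family u -> (N <= M)%nat ->
  nsq (hsub (hsub x (proj u N x)) (hsub x (proj u M x))) =
  rsum M (fun j => Cnorm2 (hinner x (u j))) - rsum N (fun j => Cnorm2 (hinner x (u j))).
Proof.
  intros O HNM.
  assert (E : hsub (hsub x (proj u N x)) (hsub x (proj u M x)) = hsub (proj u M x) (proj u N x)) by veq.
  rewrite E, nsq_sub, !nsq_proj, Re_proj_proj; auto. ring.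
Qed.

(* The residuals x - P_N x converge to a vector y orthogonal to the whole family,
   with the same inner products as x against such vectors (Bessel + completeness). *)
Lemma proj_lim (u : nat -> H) x : ortho_family u ->
  exists y, hconv (fun N => hsub x (proj u N x)) y /\ (forall j, hinner y (u j) = C0) /\
    (forall z, (forall j, hinner z (u j) = C0) -> hinner z y = hinner z x).
Proof.
  intro O. set (a := fun j => Cnorm2 (hinner x (u j))).
  destruct (series_exists a (nsq x)) as [Ss [HS HSb]].
  { intro; apply Cnorm2_nonneg. } { intro N; apply bessel_fin; auto. }
  destruct (cauchy_conv (fun N => hsub x (proj u N x))) as [y Hy].
  { intros e He. destruct (series_tail_small a Ss e HS He) as [N HN]. exists N. intros m n Hm Hn.
    assert (Ha : forall k, 0 <= a k) by (intro; apply Cnorm2_nonneg).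
    destruct (le_lt_dec m n).
    - rewrite nsq_proj_diff; auto. pose proof (series_partial_le a Ss n Ha HS).
      pose proof (rsum_mono N m a Hm Ha). fold a. lra.
    - rewrite <- nsq_opp. assert (E : hopp (hsub (hsub x (proj u m x)) (hsub x (proj u n x))) = hsub (hsub x (proj u n x)) (hsub x (proj u m x))) by veq.
      rewrite E, nsq_proj_diff by (auto; lia). pose proof (series_partial_le a Ss m Ha HS).
      pose proof (rsum_mono N n a Hn Ha). fold a. lra. }
  exists y. split; auto. split.
  - intro j. apply (inner_orth_lim (fun n => hsub x (proj u (n + S j) x)) y (u j)).
    + apply (hconv_sub_seq (fun N => hsub x (proj u N x)) y (fun n => (n + S j)%nat)); auto. intro n; lia.
    + intro n. apply resid_orth; auto; lia.
  - intros z Hz. apply C_ext.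
    + apply (UL_sequence (fun n => Re (hinner z (hsub x (proj u n x))))).
      apply hconv_Re_r; auto. eapply Un_cv_ext; [|apply (cv_const (Re (hinner z x)))].
      intro n. simpl. unfold proj. autorewrite with ipsimp. rewrite (orth_sum u n _ z); [simpl; ring|auto].
    + apply (UL_sequence (fun n => Im (hinner z (hsub x (proj u n x))))).
      apply hconv_Im_r; auto. eapply Un_cv_ext; [|apply (cv_const (Im (hinner z x)))].
      intro n. simpl. unfold proj. autorewrite with ipsimp. rewrite (orth_sum u n _ z); [simpl; ring|auto].
Qed.

End ProjectionLimit.

Section Frames.
Context {H : SepHilbert}.
Implicit Types x y z : H.

Lemma orthonormal_family (e : nat -> H) : orthonormal e -> ortho_family e.
Proof.
  intro Oe. split.
  - intros i j Hij. rewrite Oe. destruct (Nat.eqb_spec i j); [lia|auto].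
  - intro i. right. rewrite Oe, Nat.eqb_refl; auto.
Qed.

Lemma parseval_onb (e : nat -> H) x : is_ONB e -> infinite_sum (frame_sum e x) (nsq x).
Proof.
  intros [Oe C]. destruct (proj_lim e x (orthonormal_family e Oe)) as [y [Hy [Hy1 _]]].
  assert (Y0 : y = hzero) by (apply C; auto). subst y.
  pose proof (hconv_nsq _ _ Hy) as Hn. rewrite nsq_hzero in Hn.
  apply cv_rsum_to_series.
  assert (C2 : Un_cv (fun N => nsq x - nsq (hsub x (proj e N x))) (nsq x - 0)) by (apply CV_minus; [apply cv_const|auto]).
  rewrite Rminus_0_r in C2. eapply Un_cv_ext; [|exact C2]. intro N. simpl.
  rewrite nsq_resid by (apply orthonormal_family; auto). unfold frame_sum. ring.
Qed.

Lemma onb_unit (e : nat -> H) n : orthonormal e -> nsq (e n) = 1.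
Proof. intro Oe. unfold nsq. rewrite Oe, Nat.eqb_refl. reflexivity. Qed.

Lemma tight_frame_bounds (f : nat -> H) (u : H) : nsq u = 1 ->
  (forall x, infinite_sum (frame_sum f x) (nsq x)) -> lower_frame_bound f 1 /\ upper_frame_bound f 1.
Proof.
  intros Hu P. split; split.
  - intros c [Hc Hcs]. specialize (Hcs u (nsq u) (P u)). rewrite hnorm_sq2, Hu in Hcs. lra.
  - intros b Hb. apply Hb. split; [lra|]. intros x s Hs.
    rewrite (series_unique _ _ _ Hs (P x)), hnorm_sq2. lra.
  - intros c [Hc Hcs]. specialize (Hcs u (nsq u) (P u)). rewrite hnorm_sq2, Hu in Hcs. lra.
  - intros b Hb. apply Hb. split; [lra|]. intros x s Hs.
    rewrite (series_unique _ _ _ Hs (P x)), hnorm_sq2. lra.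
Qed.

Lemma onb_frames (e : nat -> H) : is_ONB e -> parseval e /\ frame_lower_ge1 e.
Proof.
  intro Ho. pose proof (fun x => parseval_onb e x Ho) as P.
  assert (Fr : is_frame e).
  { exists 1, 1. split; [lra|]. intro x. exists (nsq x). split; [apply P|]. rewrite hnorm_sq2. lra. }
  destruct (tight_frame_bounds e (e O) (onb_unit e O (proj1 Ho)) P) as [Low Up].
  split; [split; auto|]. split; auto. exists 1. split; auto. lra.
Qed.

Lemma frame_ext (f : nat -> H) : is_frame f -> exists C1 C2, 0 < C1 <= C2 /\
  forall x, exists s, infinite_sum (frame_sum f x) s /\ C1 * nsq x <= s /\ s <= C2 * nsq x.
Proof.
  intros [C1 [C2 [HC Hx]]]. exists C1, C2. split; auto. intro x. destruct (Hx x) as [s [Hs Hb]].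
  exists s. rewrite hnorm_sq2 in Hb. split; auto.
Qed.

Lemma frame_vec_bound (f : nat -> H) C2 : 0 < C2 ->
  (forall x, exists s, infinite_sum (frame_sum f x) s /\ s <= C2 * nsq x) -> forall n, nsq (f n) <= C2.
Proof.
  intros HC Hx n. destruct (Hx (f n)) as [s [Hs Hb]].
  assert (Ht : Cnorm2 (hinner (f n) (f n)) <= s).
  { eapply Rle_trans; [|apply (series_partial_le (frame_sum f (f n)) s (S n)); auto].
    apply (rsum_term_le (S n) (frame_sum f (f n)) n); [intro; apply Cnorm2_nonneg|lia].
    intro; apply Cnorm2_nonneg. }
  rewrite Cnorm2_self in Ht.
  destruct (Rle_lt_or_eq_dec 0 (nsq (f n)) (nsq_nonneg (f n))) as [Pn|Zn]; [|lra].
  apply (Rmult_le_reg_r (nsq (f n))); auto. nra.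
Qed.

Lemma lower_ge1_bound (f : nat -> H) : frame_lower_ge1 f -> lower_frame_ineq f 1.
Proof.
  intros [Fr [A [[U L] HA]]] x. destruct (frame_ext f Fr) as [C1 [C2 [HC Hx]]].
  destruct (Hx x) as [s [Hs [Hs1 Hs2]]]. exists s. split; auto. rewrite Rmult_1_l.
  apply Rnot_lt_le. intro Hlt.
  assert (Pn : 0 < nsq x) by (pose proof (nsq_nonneg x); nra).
  set (c := s / nsq x).
  assert (Hc1 : c < 1) by (unfold c; apply (Rmult_lt_reg_r (nsq x)); auto; unfold Rdiv; rewrite Rmult_assoc, Rinv_l, Rmult_1_r; lra).
  assert (NUB : ~ is_upper_bound (adm_lower f) c) by (intro Hub; specialize (L c Hub); lra).
  apply NUB. intros c' [Hc' Hcs']. specialize (Hcs' x s Hs). rewrite hnorm_sq2 in Hcs'.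
  unfold c. apply (Rmult_le_reg_r (nsq x)); auto. unfold Rdiv. rewrite Rmult_assoc, Rinv_l, Rmult_1_r; lra.
Qed.

Lemma parseval_bound (f : nat -> H) : parseval f ->
  forall x, exists s, infinite_sum (frame_sum f x) s /\ nsq x <= s /\ s <= nsq x.
Proof.
  intros [Fr [Lo [U L]]] x.
  destruct (lower_ge1_bound f (conj Fr (ex_intro _ 1 (conj Lo (Rle_refl 1)))) x) as [s [Hs Hs1]].
  exists s. split; auto. split; [lra|].
  apply Rnot_lt_le. intro Hlt.
  assert (Pn : 0 < nsq x).
  { destruct (Rle_lt_or_eq_dec 0 (nsq x) (nsq_nonneg x)); auto. exfalso.
    symmetry in e. apply nsq_zero_iff in e. subst x.
    assert (s = 0).
    { apply (series_unique (frame_sum f hzero)); auto. eapply series_ext; [|apply series_zero].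
      intro n; unfold frame_sum; rewrite inner0l; unfold Cnorm2; simpl; ring. }
    rewrite nsq_hzero in Hlt; lra. }
  set (c := s / nsq x).
  assert (Hc1 : 1 < c) by (unfold c; apply (Rmult_lt_reg_r (nsq x)); auto; unfold Rdiv; rewrite Rmult_assoc, Rinv_l, Rmult_1_r; lra).
  assert (NLB : ~ (forall s0, adm_upper f s0 -> c <= s0)) by (intro Hlb; specialize (L c Hlb); lra).
  apply NLB. intros c' [Hc' Hcs']. specialize (Hcs' x s Hs). rewrite hnorm_sq2 in Hcs'.
  unfold c. apply (Rmult_le_reg_r (nsq x)); auto. unfold Rdiv. rewrite Rmult_assoc, Rinv_l, Rmult_1_r; lra.
Qed.

Lemma parseval_lower (f : nat -> H) : parseval f -> lower_frame_ineq f 1.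
Proof.
  intros Hf x. destruct (parseval_bound f Hf x) as [s [Hs [Hs1 _]]].
  exists s. split; [exact Hs|lra].
Qed.

Lemma onb_lower_frame_ineq (e : nat -> H) : is_ONB e -> lower_frame_ineq e 1.
Proof. intro Ho. apply parseval_lower, (onb_frames e Ho). Qed.

End Frames.

Section GramSchmidt.
Context {H : SepHilbert}.
Implicit Types x y z : H.

Definition nthL (L : list H) : nat -> H := fun i => nth i L hzero.
Definition orthonormal_list (L : list H) := forall i j, (i < length L)%nat -> (j < length L)%nat ->
  hinner (nthL L i) (nthL L j) = if Nat.eqb i j then C1 else C0.
Definition projL (L : list H) x := proj (nthL L) (length L) x.

Lemma nthL_over L i : (length L <= i)%nat -> nthL L i = hzero.
Proof. intro Hi. unfold nthL. apply nth_overflow; auto. Qed.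

Lemma orthonormal_list_family L : orthonormal_list L -> ortho_family (nthL L).
Proof.
  intro O. split.
  - intros i j Hij. destruct (le_lt_dec (length L) i). rewrite nthL_over by auto; apply inner0l.
    destruct (le_lt_dec (length L) j). rewrite (nthL_over L j) by auto; apply inner0r.
    rewrite O; auto. destruct (Nat.eqb_spec i j); [lia|auto].
  - intro i. destruct (le_lt_dec (length L) i). left; rewrite nthL_over by auto; apply inner0l.
    right. rewrite O, Nat.eqb_refl; auto.
Qed.

Definition gs_step (L : list H) x : list H :=
  let r := hsub x (projL L x) in
  if Req_EM_T (nsq r) 0 then L else L ++ (hscal (RtoC (/ hnorm r)) r :: nil).

Lemma nthL_app1 L v i : (i < length L)%nat -> nthL (L ++ v :: nil) i = nthL L i.
Proof. intro Hi. unfold nthL. apply app_nth1; auto. Qed.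
Lemma nthL_app2 L v : nthL (L ++ v :: nil) (length L) = v.
Proof. unfold nthL. rewrite app_nth2, Nat.sub_diag by lia. reflexivity. Qed.

Lemma resid_orthL L x i : orthonormal_list L -> hinner (hsub x (projL L x)) (nthL L i) = C0.
Proof.
  intro O. destruct (le_lt_dec (length L) i). rewrite nthL_over by auto; apply inner0r.
  apply resid_orth; auto. apply orthonormal_list_family; auto.
Qed.

Lemma r_proj_orth L x : orthonormal_list L -> hinner (hsub x (projL L x)) (projL L x) = C0.
Proof.
  intro O. unfold projL at 2. unfold proj. apply orth_sum. intros j _. apply resid_orthL; auto.
Qed.

Lemma gs_step_on L x : orthonormal_list L -> orthonormal_list (gs_step L x).
Proof.
  intro O. unfold gs_step. set (r := hsub x (projL L x)).
  destruct (Req_EM_T (nsq r) 0) as [Z|NZ]; auto.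
  set (c := / hnorm r). set (ee := hscal (RtoC c) r).
  assert (Pr : 0 < nsq r) by (pose proof (nsq_nonneg r); lra).
  assert (Hn : 0 < hnorm r) by (apply sqrt_lt_R0; auto).
  assert (Ue : hinner ee ee = C1).
  { apply C_ext; [|apply Im_self]. fold (nsq ee). unfold ee. rewrite nsq_scal. simpl. unfold c.
    rewrite <- hnorm_sq. field. lra. }
  assert (Oe : forall i, (i < length L)%nat -> hinner ee (nthL L i) = C0).
  { intros i Hi. unfold ee. rewrite hinner_scal_l. unfold r. rewrite resid_orthL; auto. apply C_ext; simpl; ring. }
  intros i j Hi Hj. rewrite length_app in Hi, Hj. simpl in Hi, Hj.
  destruct (Nat.eq_dec i (length L)), (Nat.eq_dec j (length L)).
  - subst. rewrite nthL_app2, Nat.eqb_refl. auto.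
  - subst i. rewrite nthL_app2, nthL_app1 by lia. rewrite Oe by lia. destruct (Nat.eqb_spec (length L) j); [lia|auto].
  - subst j. rewrite nthL_app2, nthL_app1 by lia. rewrite hinner_conj, Oe by lia.
    destruct (Nat.eqb_spec i (length L)); [lia|]. apply C_ext; simpl; ring.
  - rewrite !nthL_app1 by lia. apply O; lia.
Qed.

Lemma projL_app L v x : projL (L ++ v :: nil) x = hadd (projL L x) (hscal (hinner x v) v).
Proof.
  unfold projL, proj. rewrite length_app. simpl. rewrite Nat.add_1_r. simpl.
  rewrite nthL_app2. f_equal. apply hsum_ext. intros k Hk. rewrite nthL_app1; auto.
Qed.

Lemma gs_step_span L x : orthonormal_list L -> x = projL (gs_step L x) x.
Proof.
  intro O. unfold gs_step. set (r := hsub x (projL L x)).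
  destruct (Req_EM_T (nsq r) 0) as [Z|NZ].
  - apply nsq_zero_iff in Z. apply vec_ext; intro z.
    pose proof (f_equal (fun v => Re (hinner v z)) Z) as E. simpl in E. unfold r in E.
    autorewrite with ipsimp in E. lra.
  - rewrite projL_app. set (c := / hnorm r).
    assert (Pr : 0 < nsq r) by (pose proof (nsq_nonneg r); lra).
    assert (Hn : 0 < hnorm r) by (apply sqrt_lt_R0; auto).
    assert (Ec : c * c * nsq r = 1) by (unfold c; rewrite <- hnorm_sq; field; lra).
    pose proof (r_proj_orth L x O) as RP. fold r in RP.
    assert (Re1 : Re (hinner x r) = nsq r).
    { assert (Er : Re (hinner r r) = Re (hinner x r) - Re (hinner (projL L x) r)) by (unfold r at 1; autorewrite with ipsimp; auto).
      rewrite (Re_sym r (projL L x)), RP in Er. simpl in Er. unfold nsq. lra. }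
    assert (Im1 : Im (hinner x r) = 0).
    { assert (Ei : Im (hinner r r) = Im (hinner x r) - Im (hinner (projL L x) r)) by (unfold r at 1; autorewrite with ipsimp; auto).
      rewrite (Im_sym r (projL L x)), RP, Im_self in Ei. simpl in Ei. lra. }
    apply vec_ext; intro z. autorewrite with ipsimp. simpl. rewrite Re1, Im1.
    assert (Er : Re (hinner r z) = Re (hinner x z) - Re (hinner (projL L x) z)) by (unfold r; autorewrite with ipsimp; auto).
    rewrite Er.
    replace (c * nsq r - 0 * 0) with (c * nsq r) by ring.
    replace (c * 0 + 0 * nsq r) with 0 by ring.
    transitivity (Re (hinner (projL L x) z) + (c * c * nsq r) * (Re (hinner x z) - Re (hinner (projL L x) z))); [|ring].
    rewrite Ec. ring.
Qed.

Fixpoint gram_schmidt (s : nat -> H) (n : nat) : list H :=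
  match n with O => nil | S k => gs_step (gram_schmidt s k) (s k) end.

Lemma gram_schmidt_on s n : orthonormal_list (gram_schmidt s n).
Proof. induction n; simpl. intros i j Hi; simpl in Hi; lia. apply gs_step_on; auto. Qed.

Lemma gram_schmidt_span s n : s n = projL (gram_schmidt s (S n)) (s n).
Proof. simpl. apply gs_step_span, gram_schmidt_on. Qed.

Lemma gram_schmidt_prefix s n : exists l, gram_schmidt s (S n) = gram_schmidt s n ++ l.
Proof. simpl. unfold gs_step. destruct (Req_EM_T _ 0). exists nil; rewrite app_nil_r; auto. eexists; eauto. Qed.

Lemma gram_schmidt_prefix_le s n m : (n <= m)%nat -> exists l, gram_schmidt s m = gram_schmidt s n ++ l.
Proof.
  intro Hnm. induction Hnm. exists nil; rewrite app_nil_r; auto.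
  destruct IHHnm as [l1 E1]. destruct (gram_schmidt_prefix s m) as [l2 E2]. exists (l1 ++ l2). rewrite E2, E1, app_assoc; auto.
Qed.

Lemma gram_schmidt_nth s n m k : (n <= m)%nat -> (k < length (gram_schmidt s n))%nat -> nthL (gram_schmidt s m) k = nthL (gram_schmidt s n) k.
Proof. intros Hnm Hk. destruct (gram_schmidt_prefix_le s n m Hnm) as [l E]. rewrite E. unfold nthL. apply app_nth1; auto. Qed.

Lemma gram_schmidt_length_mono s n m : (n <= m)%nat -> (length (gram_schmidt s n) <= length (gram_schmidt s m))%nat.
Proof. intro Hnm. destruct (gram_schmidt_prefix_le s n m Hnm) as [l E]. rewrite E, length_app. lia. Qed.

Lemma gram_schmidt_in s n v : In v (gram_schmidt s n) -> exists i, (i < length (gram_schmidt s n))%nat /\ v = nthL (gram_schmidt s n) i.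
Proof. intro Hv. destruct (In_nth _ _ hzero Hv) as [i [Hi E]]. exists i. split; auto. Qed.

Lemma gram_schmidt_orth_source s x n : (forall v, In v (gram_schmidt s (S n)) -> hinner x v = C0) -> hinner x (s n) = C0.
Proof.
  intro Ho. rewrite (gram_schmidt_span s n). unfold projL, proj. apply orth_sum. intros j Hj.
  apply Ho. unfold nthL. apply nth_In; auto.
Qed.

End GramSchmidt.

Section EigenBasis.
Context {H : SepHilbert}.
Implicit Types x y z : H.

Definition total (s : nat -> H) : Prop := forall x, (forall n, hinner x (s n) = C0) -> x = hzero.

Lemma density (d : nat -> H) :
  (forall x eps, 0 < eps -> exists n, hnorm (hsub x (d n)) < eps) -> total d.
Proof.
  intros Hd x Ho. apply hnorm_zero_eq. apply NNPP; intro NZ.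
  assert (Hp : 0 < hnorm x) by (pose proof (hnorm_nonneg x); lra).
  destruct (Hd x (hnorm x / 2)) as [n Hn]; [lra|].
  pose proof (Re_CS (hsub x (d n)) x) as C. pose proof (Rle_abs (Re (hinner (hsub x (d n)) x))).
  assert (E : Re (hinner (hsub x (d n)) x) = nsq x).
  { autorewrite with ipsimp. rewrite (Re_sym x (d n)), Ho. simpl. unfold nsq; ring. }
  rewrite E in *. rewrite <- hnorm_sq in *. pose proof (hnorm_nonneg (hsub x (d n))). nra.
Qed.

Lemma stabilize (f : nat -> nat) k : (forall n m, (n <= m)%nat -> (f n <= f m)%nat) -> (forall n, (f n <= k)%nat) ->
  exists N0, forall N, (N0 <= N)%nat -> f N = f N0.
Proof.
  intros Mono Bd. apply NNPP; intro C.
  assert (Grow : forall i, exists N, (i <= f N)%nat).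
  { induction i. exists O; lia. destruct IHi as [N HN].
    apply NNPP; intro C2. apply C. exists N. intros N' HN'. apply NNPP; intro C3.
    apply C2. exists N'. pose proof (Mono N N' HN'). lia. }
  destruct (Grow (S k)) as [N HN]. pose proof (Bd N). lia.
Qed.

(* Dimension count: if a finite orthonormal list L has trivial orthogonal
   complement, there is no infinite orthonormal sequence (by Bessel, m + 1
   orthonormal vectors would have total mass at most m on L). *)
Lemma complete_list_finite_dim (L : list H) (e' : nat -> H) : orthonormal_list L ->
  (forall x, (forall i, (i < length L)%nat -> hinner x (nthL L i) = C0) -> x = hzero) ->
  ~ orthonormal e'.
Proof.
  intros OnL Zero He'. set (m := length L).
  assert (Oe' : ortho_family e') by (apply orthonormal_family; auto).
  assert (OL : ortho_family (nthL L)) by (apply orthonormal_list_family; auto).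
  assert (One : forall i, rsum m (fun j => Cnorm2 (hinner (e' i) (nthL L j))) = 1).
  { intro i. assert (R0 : hsub (e' i) (projL L (e' i)) = hzero).
    { apply Zero. intros j Hj. apply resid_orthL; auto. }
    pose proof (nsq_resid (nthL L) m (e' i) OL) as N. unfold projL in R0. fold m in R0.
    rewrite R0, nsq_hzero in N. rewrite (onb_unit e' i He') in N. lra. }
  assert (Tot : INR (S m) <= INR m).
  { replace (INR (S m)) with (rsum (S m) (fun i => rsum m (fun j => Cnorm2 (hinner (e' i) (nthL L j))))).
    2:{ rewrite (rsum_ext _ _ (fun _ => 1)) by (intros; apply One). rewrite rsum_const; ring. }
    rewrite rsum_swap. rewrite <- (Rmult_1_r (INR m)), <- rsum_const.
    apply rsum_le. intros j Hj. eapply Rle_trans.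
    - rewrite (rsum_ext _ _ (fun i => Cnorm2 (hinner (nthL L j) (e' i)))) by (intros; apply Cnorm2_sym).
      apply bessel_fin; auto.
    - assert (Ej : hinner (nthL L j) (nthL L j) = C1) by (rewrite (OnL j j Hj Hj), Nat.eqb_refl; auto).
      unfold nsq. rewrite Ej. simpl; lra. }
  apply INR_le in Tot. lia.
Qed.

Lemma gram_schmidt_unbounded (s : nat -> H) : total s -> (exists e : nat -> H, orthonormal e) ->
  forall k, exists N, (k < length (gram_schmidt s N))%nat.
Proof.
  intros Dens [e' He'] k. apply NNPP; intro C.
  assert (Bd : forall N, (length (gram_schmidt s N) <= k)%nat).
  { intro N. destruct (le_lt_dec (length (gram_schmidt s N)) k); auto. exfalso; apply C; exists N; lia. }
  destruct (stabilize (fun N => length (gram_schmidt s N)) k (gram_schmidt_length_mono s) Bd) as [N0 HN0].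
  set (L := gram_schmidt s N0).
  assert (Stab : forall N, (N0 <= N)%nat -> gram_schmidt s N = L).
  { intros N HN. destruct (gram_schmidt_prefix_le s N0 N HN) as [l E]. fold L in E.
    specialize (HN0 N HN). simpl in HN0. fold L in HN0. rewrite E, length_app in HN0.
    destruct l; [rewrite app_nil_r in E; auto|simpl in HN0; lia]. }
  apply (complete_list_finite_dim L e' (gram_schmidt_on s N0)); auto.
  intros x Hx. apply Dens. intro n. apply gram_schmidt_orth_source. intros v Hv.
  destruct (gram_schmidt_prefix_le s (S n) (Nat.max (S n) N0) ltac:(lia)) as [l E].
  rewrite (Stab (Nat.max (S n) N0) ltac:(lia)) in E.
  assert (Hv' : In v L) by (rewrite E; apply in_or_app; left; auto).
  destruct (gram_schmidt_in s N0 v Hv') as [i [Hi Ei]]. fold L in Ei, Hi. rewrite Ei. auto.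
Qed.

Lemma gram_schmidt_ONB (s : nat -> H) : total s ->
  (forall k, exists N, (k < length (gram_schmidt s N))%nat) ->
  exists e, is_ONB e /\ forall n, exists N, In (e n) (gram_schmidt s N).
Proof.
  intros Dens Inf. destruct (choice _ Inf) as [Nk HNk].
  set (e := fun k => nthL (gram_schmidt s (Nk k)) k).
  assert (E_nth : forall N k, (k < length (gram_schmidt s N))%nat -> e k = nthL (gram_schmidt s N) k).
  { intros N k Hk. unfold e. rewrite <- (gram_schmidt_nth s (Nk k) (Nat.max N (Nk k)) k) by (auto; lia).
    rewrite <- (gram_schmidt_nth s N (Nat.max N (Nk k)) k) by (auto; lia). reflexivity. }
  exists e. split; [split|].
  - intros i j. set (N := Nat.max (Nk i) (Nk j)).
    assert (Hi : (i < length (gram_schmidt s N))%nat)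
      by (pose proof (gram_schmidt_length_mono s (Nk i) N ltac:(lia)); pose proof (HNk i); lia).
    assert (Hj : (j < length (gram_schmidt s N))%nat)
      by (pose proof (gram_schmidt_length_mono s (Nk j) N ltac:(lia)); pose proof (HNk j); lia).
    rewrite (E_nth N i Hi), (E_nth N j Hj). apply gram_schmidt_on; auto.
  - intros x Hx. apply Dens. intro n. apply gram_schmidt_orth_source. intros v Hv.
    destruct (gram_schmidt_in s (S n) v Hv) as [i [Hi Ei]]. rewrite Ei, <- (E_nth (S n) i Hi). auto.
  - intro n. exists (Nk n). unfold e. apply nth_In, HNk.
Qed.

Variable T : H -> H.
Hypothesis hc : hcompact T.
Hypothesis hp : hpositive T.

(* A total sequence whose even terms are the eigenvectors and whose odd terms are
   orthogonal to all of them (residuals of a dense sequence after projection). *)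
Lemma eigen_kernel_sequence : exists s : nat -> H, total s /\
  (forall j, s (2 * j)%nat = eigvec T j) /\
  (forall j i, hinner (s (S (2 * j))) (eigvec T i) = C0).
Proof.
  destruct (hseparable H) as [d Hd].
  assert (Og : ortho_family (eigvec T)) by (apply eigvec_family; auto).
  destruct (choice (fun j y => (forall i, hinner y (eigvec T i) = C0) /\
      (forall z, (forall i, hinner z (eigvec T i) = C0) -> hinner z y = hinner z (d j))))
    as [y Hy].
  { intro j. destruct (proj_lim (eigvec T) (d j) Og) as [y0 [_ [H1 H2]]]. exists y0; split; auto. }
  set (s := fun n => if Nat.even n then eigvec T (Nat.div2 n) else y (Nat.div2 n)).
  assert (s_even : forall j, s (2 * j)%nat = eigvec T j).
  { intro j. unfold s. rewrite Nat.even_mul, Nat.div2_double. reflexivity. }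
  assert (s_odd : forall j, s (S (2 * j)) = y j).
  { intro j. unfold s. rewrite Nat.even_succ, Nat.odd_mul, Nat.div2_succ_double. reflexivity. }
  exists s. split; [|split; [exact s_even|]].
  - intros x Hx. apply (density d); [intros x0 e0 He0; apply (Hd x0 e0 He0)|].
    intro j. destruct (Hy j) as [_ H2]. rewrite <- H2, <- s_odd; auto.
    intro i. rewrite <- s_even. auto.
  - intros j i. rewrite s_odd. apply (Hy j).
Qed.

Definition eig_or_kernel (P : nat -> Prop) (v : H) : Prop :=
  (exists j, P j /\ 0 < eigval T j /\ v = eigvec T j) \/ T v = hzero.

Lemma eig_or_kernel_mono (P Q : nat -> Prop) v : (forall j, P j -> Q j) ->
  eig_or_kernel P v -> eig_or_kernel Q v.
Proof. intros PQ [[j [Pj R]]|R]; [left; exists j; auto|right; auto]. Qed.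

Lemma kernel_residual (L : list H) P y : (forall v, In v L -> eig_or_kernel P v) ->
  (forall i, hinner y (eigvec T i) = C0) -> T (hsub y (projL L y)) = hzero.
Proof.
  intros HL Hy. rewrite (T_sub T (compact_linear T hc)), (eigvec_kernel T hc hp y Hy).
  assert (TP : T (projL L y) = hzero).
  { unfold projL, proj. rewrite (T_hsum T _ _ (compact_linear T hc)). apply hsum_zero.
    intros k Hk. assert (Hin : In (nthL L k) L) by (apply nth_In; auto).
    rewrite (T_scal T (compact_linear T hc)).
    destruct (HL _ Hin) as [[i [_ [_ Ei]]]|Ti].
    - rewrite Ei, Hy. apply hscal_C0.
    - rewrite Ti. apply hscal_zero. }
  rewrite TP. apply hsub_diag.
Qed.

Lemma eigvec_residual (L : list H) j : 0 < eigval T j ->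
  (forall v, In v L -> eig_or_kernel (fun i => (i < j)%nat) v) -> projL L (eigvec T j) = hzero.
Proof.
  intros Pj HL. apply proj_zero_coef. intros k Hk. assert (Hin : In (nthL L k) L) by (apply nth_In; auto).
  destruct (HL _ Hin) as [[i [Hi [_ Ei]]]|Ti].
  - rewrite Ei. apply (proj1 (eigvec_family T hc hp)). lia.
  - apply (eig_orth T (compact_linear T hc) hp (eigvec T j) (nthL L k) (eigval T j) 0).
    + apply (eigvec_eq T hc hp).
    + rewrite Ti. symmetry. apply hscal_C0.
    + lra.
Qed.

Lemma gram_schmidt_eig_or_kernel (s : nat -> H) :
  (forall j, s (2 * j)%nat = eigvec T j) -> (forall j i, hinner (s (S (2 * j))) (eigvec T i) = C0) ->
  forall n v, In v (gram_schmidt s n) -> eig_or_kernel (fun j => (2 * j < n)%nat) v.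
Proof.
  intros s_even s_odd. induction n; [intros v []|]. intros v Hv.
  assert (IH : forall v, In v (gram_schmidt s n) -> eig_or_kernel (fun j => (2 * j < S n)%nat) v).
  { intros w Hw. apply (eig_or_kernel_mono (fun j => (2 * j < n)%nat)); [intros; lia|auto]. }
  change (In v (gs_step (gram_schmidt s n) (s n))) in Hv. unfold gs_step in Hv.
  set (L := gram_schmidt s n) in *. set (r := hsub (s n) (projL L (s n))) in *.
  destruct (Req_EM_T (nsq r) 0) as [Z|NZ]; [auto|].
  apply in_app_or in Hv. destruct Hv as [Hv|[Hv|[]]]; [auto|subst v; unfold r in *; clear r].
  destruct (Nat.Even_or_Odd n) as [[j Ej]|[j Ej]]; subst n.
  - rewrite s_even in *. destruct (Rlt_or_le 0 (eigval T j)) as [Pj|Zj].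
    + assert (P0 : projL L (eigvec T j) = hzero).
      { apply (eigvec_residual L j Pj). intros w Hw.
        apply (eig_or_kernel_mono (fun i => (2 * i < 2 * j)%nat)); [intros; lia|auto]. }
      rewrite P0, hsub_zero. left. exists j. split; [lia|]. split; auto.
      unfold hnorm. fold (nsq (eigvec T j)). rewrite eigvec_unit by auto. rewrite sqrt_1, Rinv_1.
      apply hscal_one.
    + rewrite (eigvec_zero T hc hp j Zj) in NZ. unfold projL in NZ.
      rewrite proj_zero_coef, hsub_zero, nsq_hzero in NZ; [lra|intros; apply inner0l].
  - right. rewrite (T_scal T (compact_linear T hc)).
    rewrite Nat.add_1_r in *. rewrite (kernel_residual L (fun i => (2 * i < S (2 * j))%nat)); auto.
    apply hscal_zero.
Qed.

Lemma eigen_ONB : (exists e : nat -> H, orthonormal e) -> exists e, is_ONB e /\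
  forall n, T (e n) = hzero \/ (exists j, 0 < eigval T j /\ e n = eigvec T j).
Proof.
  intro Hinfdim. destruct eigen_kernel_sequence as [s [Tot [s_even s_odd]]].
  destruct (gram_schmidt_ONB s Tot (gram_schmidt_unbounded s Tot Hinfdim)) as [e [Ho He]].
  exists e. split; auto. intro n. destruct (He n) as [N HN].
  destruct (gram_schmidt_eig_or_kernel s s_even s_odd N (e n) HN) as [[j [_ [Pj Ej]]]|Tz];
    [right; exists j; auto|left; auto].
Qed.

End EigenBasis.

Lemma partial_sums_injective_bound (a b : nat -> R) (Pj : nat -> nat -> Prop) Sa :
  (forall j, 0 <= a j) -> infinite_sum a Sa ->
  (forall n, b n = 0 \/ exists j, b n = a j /\ Pj n j) ->
  (forall n m j, Pj n j -> Pj m j -> n = m) -> forall N, rsum N b <= Sa.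
Proof.
  intros Ha HS Hb Hu N.
  destruct (choice (fun n j => b n = 0 \/ (b n = a j /\ Pj n j))) as [gi Hgi].
  { intro n. destruct (Hb n) as [Z|[j Hj]]. exists O; left; auto. exists j; right; auto. }
  set (ind := fun N j => if excluded_middle_informative (exists n, (n < N)%nat /\ b n <> 0 /\ gi n = j) then a j else 0).
  assert (ind_nn : forall N j, 0 <= ind N j) by (intros; unfold ind; destruct (excluded_middle_informative _); auto; lra).
  assert (Claim : forall N M, (forall n, (n < N)%nat -> (gi n < M)%nat) -> rsum N b <= rsum M (ind N)).
  { induction N0 as [|N0 IH]; intros M HM.
    - simpl. apply rsum_nonneg; intros; apply ind_nn.
    - simpl. specialize (IH M (fun n Hn => HM n ltac:(lia))).
      destruct (Req_dec (b N0) 0) as [Z|NZ].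
      + rewrite Z, Rplus_0_r. eapply Rle_trans; [exact IH|]. apply rsum_le. intros j _.
        unfold ind. destruct (excluded_middle_informative (exists n, (n < N0)%nat /\ _ /\ _)) as [[n [Hn1 Hn2]]|];
        destruct (excluded_middle_informative (exists n, (n < S N0)%nat /\ _ /\ _)) as [|C]; try (pose proof (Ha j); lra).
        exfalso; apply C; exists n; split; [lia|auto].
      + destruct (Hgi N0) as [Z|[Eb Pb]]; [contradiction|].
        assert (Hm : (gi N0 < M)%nat) by (apply HM; lia).
        apply Rle_trans with (rsum M (ind N0) + rsum M (fun j => if Nat.eqb j (gi N0) then a (gi N0) else 0)).
        { rewrite rsum_single by auto. lra. }
        rewrite <- rsum_plus. apply rsum_le. intros j _. unfold ind.
        destruct (Nat.eqb_spec j (gi N0)) as [Ej|Ej].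
        * subst j. destruct (excluded_middle_informative (exists n, (n < N0)%nat /\ b n <> 0 /\ gi n = gi N0)) as [[n [Hn1 [Hn2 Hn3]]]|].
          -- exfalso. destruct (Hgi n) as [Z|[_ Pn]]; [contradiction|]. rewrite Hn3 in Pn.
             pose proof (Hu n N0 (gi N0) Pn Pb). lia.
          -- destruct (excluded_middle_informative (exists n, (n < S N0)%nat /\ b n <> 0 /\ gi n = gi N0)) as [|C].
             lra. exfalso; apply C. exists N0; auto.
        * destruct (excluded_middle_informative (exists n, (n < N0)%nat /\ _ /\ _)) as [[n [Hn1 Hn2]]|];
          destruct (excluded_middle_informative (exists n, (n < S N0)%nat /\ _ /\ _)) as [|C]; try (pose proof (Ha j); lra).
          exfalso; apply C; exists n; split; [lia|auto]. }
  assert (Mex : forall N, exists M, forall n, (n < N)%nat -> (gi n < M)%nat).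
  { induction N0. exists O; intros; lia. destruct IHN0 as [M HM]. exists (Nat.max M (S (gi N0))).
    intros n Hn. destruct (Nat.eq_dec n N0). subst; lia. pose proof (HM n ltac:(lia)); lia. }
  destruct (Mex N) as [M HM]. eapply Rle_trans; [apply (Claim N M HM)|].
  eapply Rle_trans; [|apply (series_partial_le a Sa M Ha HS)].
  apply rsum_le. intros j _. unfold ind. destruct (excluded_middle_informative _); [lra|apply Ha].
Qed.

Definition onb_sums {H : SepHilbert} (p : R) (T : H -> H) (s : R) : Prop :=
  exists e : nat -> H, is_ONB e /\
    infinite_sum (fun n => rpow (Re (hinner (T (e n)) (e n))) p) s.
Definition weighted_frame_sums {H : SepHilbert} (p : R) (T : H -> H) (s : R) : Prop :=
  exists f : nat -> H, frame_lower_ge1 f /\ infinite_sum (fun n => weighted_term p T (f n)) s.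
Definition parseval_sums {H : SepHilbert} (p : R) (T : H -> H) (s : R) : Prop :=
  exists f : nat -> H, parseval f /\
    infinite_sum (fun n => rpow (Re (hinner (T (f n)) (f n))) p) s.

Lemma glb_of_min (A : R -> Prop) r : (forall s, A s -> r <= s) -> A r -> is_glb A r.
Proof. intros Hlow Hr. split; [exact Hlow|]. intros r' Hr'. apply Hr', Hr. Qed.

Section Assembly.
Context {H : SepHilbert}.
Implicit Types x y z : H.
Variable T : H -> H.
Hypothesis hl : hlinear T.
Hypothesis hb : hbounded T.
Hypothesis hpos : hpositive T.
Variable p : R.
Hypothesis Hp : 0 < p <= 1.

Lemma Rpower_1_base (t : R) : Rpower 1 t = 1.
Proof. unfold Rpower. rewrite ln_1, Rmult_0_r, exp_0. auto. Qed.

Lemma weighted_unit x : nsq x = 1 -> weighted_term p T x = rpow (Re (hinner (T x) x)) p.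
Proof.
  intro N. unfold weighted_term. unfold hnorm. fold (nsq x). rewrite N, sqrt_1.
  destruct (Req_EM_T 1 0); [lra|]. rewrite Rpower_1_base; ring.
Qed.

Lemma weighted_le_rpow x C2 : 0 < C2 -> nsq x <= C2 ->
  weighted_term p T x <= Rpower C2 (1 - p) * rpow (Re (hinner (T x) x)) p.
Proof.
  intros HC Hx. unfold weighted_term. destruct (Req_EM_T (hnorm x) 0) as [Z|NZ].
  - apply Rmult_le_pos; [left; apply Rpower_pos|apply rpow_nonneg].
  - unfold hnorm at 1. fold (nsq x). rewrite hnorm_Rpower by (apply hnorm_pos; auto).
    apply Rmult_le_compat_r; [apply rpow_nonneg|]. apply Rle_Rpower_l; [lra|]. split; auto. apply hnorm_pos; auto.
Qed.

Lemma diag_nonneg x : 0 <= Re (hinner (T x) x).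
Proof. apply hpos. Qed.

(* Conversely <Tx,x> is controlled by the weighted term: this turns a finite
   weighted sum into a trace-class-type bound sum <Tf_n,f_n> < oo. *)
Lemma quad_le_weighted K x : opbound T K ->
  Re (hinner (T x) x) <= Rpower (K + 1) (1 - p) * weighted_term p T x.
Proof.
  intro HK. destruct (Req_EM_T (hnorm x) 0) as [Z|NZ].
  - apply hnorm_zero_eq in Z. subst x. rewrite (T_zero T hl). autorewrite with ipsimp.
    apply Rmult_le_pos; [left; apply Rpower_pos|apply weighted_nonneg].
  - rewrite (weighted_pos_form T p) by auto. pose proof (hnorm_pos x NZ) as Pn.
    pose proof (opbound_quad T K x HK). destruct HK as [K0 _].
    eapply Rle_trans. apply (quad_le_rpow p _ ((K + 1) * nsq x) Hp). split; [apply diag_nonneg|nra]. nra.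
    rewrite <- Rpower_mult_distr by lra. right; ring.
Qed.

Lemma from_weighted f A Stot : 0 < A -> lower_frame_ineq f A ->
  infinite_sum (fun n => weighted_term p T (f n)) Stot ->
  hcompact T /\ exists s, infinite_sum (fun j => rpow (eigval T j) p) s /\ A * s <= Stot.
Proof.
  intros HA Hfr HS. destruct (opbound_ex T hb) as [K HK].
  assert (hc : hcompact T).
  { assert (B1 : forall n, 0 <= Re (hinner (T (f n)) (f n)) <= Rpower (K + 1) (1 - p) * weighted_term p T (f n)).
    { intro n. split; [apply diag_nonneg|apply quad_le_weighted; auto]. }
    destruct (series_compare _ _ _ B1 (series_scal _ _ (Rpower (K + 1) (1 - p)) HS)) as [G [HG _]].
    apply (frame_compact T hl hpos hb f A HA Hfr G HG). }
  split; auto. apply (frame_lower_summable T hc hpos p Hp f A Stot HA Hfr HS).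
Qed.

Lemma lp_abs (a : nat -> R) : (forall n, 0 <= a n) ->
  (lp_seq p a <-> exists s, infinite_sum (fun n => rpow (a n) p) s).
Proof.
  intro Ha. unfold lp_seq. split; intros [s Hs]; exists s; eapply series_ext; try exact Hs; intro n; simpl;
  rewrite Rabs_right by (apply Rle_ge; auto); auto.
Qed.

Lemma in_Sp_eigval (hc : hcompact T) :
  in_Sp p T <-> exists s, infinite_sum (fun j => rpow (eigval T j) p) s.
Proof.
  assert (hpb : positive_bounded_op T) by (split; auto).
  split.
  - intros [_ [lam [Hsv Hlp]]].
    assert (Eq : forall n, lam n = eigval T n) by apply (singular_values_unique T hc hpos lam hpb Hsv).
    assert (Hl0 : forall n, 0 <= lam n) by (intro n; rewrite Eq; apply eigval_nonneg; auto).
    destruct (proj1 (lp_abs lam Hl0) Hlp) as [s Hs].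
    exists s. eapply series_ext; [|exact Hs]. intro n; simpl. rewrite Eq; auto.
  - intros [s Hs]. split; auto. exists (eigval T). split. apply singular_values_eigval; auto.
    apply lp_abs. intro; apply eigval_nonneg; auto. exists s; auto.
Qed.

Lemma weighted_summable_in_Sp f A Stot : 0 < A -> lower_frame_ineq f A ->
  infinite_sum (fun n => weighted_term p T (f n)) Stot -> in_Sp p T.
Proof.
  intros HA Hfr HS. destruct (from_weighted f A Stot HA Hfr HS) as [hc [s [Hs _]]].
  apply in_Sp_eigval; auto. exists s; auto.
Qed.

Lemma onb_weighted_sum e s : is_ONB e ->
  infinite_sum (fun n => rpow (Re (hinner (T (e n)) (e n))) p) s ->
  infinite_sum (fun n => weighted_term p T (e n)) s.
Proof.
  intros [Oe Ce] Hs. eapply series_ext; [|exact Hs]. intro n.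
  symmetry; apply weighted_unit, onb_unit; auto.
Qed.

Lemma onb_summable_in_Sp e s : is_ONB e ->
  infinite_sum (fun n => rpow (Re (hinner (T (e n)) (e n))) p) s -> in_Sp p T.
Proof.
  intros Ho Hs. apply (weighted_summable_in_Sp e 1 s); [lra|apply onb_lower_frame_ineq; auto|].
  apply onb_weighted_sum; auto.
Qed.

(* (c) implies (a): with upper frame bound C2 the weighted terms are at most
   C2^(1-p) <Tf_n,f_n>^p. *)
Lemma frame_summable_in_Sp f s : is_frame f ->
  infinite_sum (fun n => rpow (Re (hinner (T (f n)) (f n))) p) s -> in_Sp p T.
Proof.
  intros Hf Hs. destruct (frame_ext f Hf) as [C1 [C2 [HC Hx]]].
  assert (Hvb : forall n, nsq (f n) <= C2).
  { apply frame_vec_bound. lra. intro x. destruct (Hx x) as [s0 [Hs0 [_ Hs2]]]. exists s0; auto. }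
  assert (B : forall n, 0 <= weighted_term p T (f n) <= Rpower C2 (1 - p) * rpow (Re (hinner (T (f n)) (f n))) p).
  { intro n. split. apply weighted_nonneg. apply weighted_le_rpow; auto; lra. }
  destruct (series_compare _ _ _ B (series_scal _ _ (Rpower C2 (1 - p)) Hs)) as [W [HW _]].
  apply (weighted_summable_in_Sp f C1 W); [lra| |auto].
  intro x. destruct (Hx x) as [s0 [Hs0 [Hs1 _]]]. exists s0; auto.
Qed.

(* Along a Parseval frame ||f_n|| <= 1, so the weighted sum is at most the plain one. *)
Lemma parseval_weighted_sum f s : parseval f ->
  infinite_sum (fun n => rpow (Re (hinner (T (f n)) (f n))) p) s ->
  exists W, infinite_sum (fun n => weighted_term p T (f n)) W /\ W <= s.
Proof.
  intros Hf Hs.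
  assert (Hvb : forall n, nsq (f n) <= 1).
  { apply frame_vec_bound. lra. intro x. destruct (parseval_bound f Hf x) as [s0 [Hs0 [_ Hs2]]].
    exists s0; split; auto; lra. }
  apply (series_compare _ _ _ ) with (2 := Hs). intro n. split; [apply weighted_nonneg|].
  pose proof (weighted_le_rpow (f n) 1 ltac:(lra) (Hvb n)) as Hle.
  rewrite Rpower_1_base, Rmult_1_l in Hle. exact Hle.
Qed.

Lemma weighted_sum_lower (hc : hcompact T) s f A Stot :
  infinite_sum (fun j => rpow (eigval T j) p) s -> 0 < A -> lower_frame_ineq f A ->
  infinite_sum (fun n => weighted_term p T (f n)) Stot -> A * s <= Stot.
Proof.
  intros Hs HA Hfr HS. destruct (frame_lower_summable T hc hpos p Hp f A Stot HA Hfr HS) as [s' [Hs' Hle]].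
  rewrite (series_unique _ _ _ Hs Hs'). exact Hle.
Qed.

Hypothesis Hinfdim : exists e : nat -> H, orthonormal e.

Lemma eigen_ONB_sum (hc : hcompact T) Sl : infinite_sum (fun j => rpow (eigval T j) p) Sl ->
  exists e, is_ONB e /\ infinite_sum (fun n => rpow (Re (hinner (T (e n)) (e n))) p) Sl.
Proof.
  intro HSl. destruct (eigen_ONB T hc hpos Hinfdim) as [e [Ho He]].
  exists e. split; auto.
  assert (Bd : forall N, rsum N (fun n => rpow (Re (hinner (T (e n)) (e n))) p) <= Sl).
  { apply (partial_sums_injective_bound (fun j => rpow (eigval T j) p) _ (fun n j => e n = eigvec T j)); auto.
    - intro; apply rpow_nonneg.
    - intro n. destruct (He n) as [Z|[j [Pj Ej]]].
      + left. rewrite Z. autorewrite with ipsimp. apply rpow_nonpos; lra.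
      + right. exists j. split; auto. rewrite Ej, (eigvec_eq T hc hpos j). autorewrite with ipsimp. simpl.
        rewrite Im_self. fold (nsq (eigvec T j)). rewrite eigvec_unit by auto. f_equal; ring.
    - intros n m j En Em. destruct Ho as [Oe _]. pose proof (Oe n m) as E. rewrite En, Em in E.
      destruct (Nat.eqb_spec n m); auto. pose proof (Oe n n) as E2. rewrite Nat.eqb_refl, En in E2.
      rewrite E2 in E. apply (f_equal Re) in E. simpl in E. lra. }
  destruct (series_exists _ Sl (fun n => rpow_nonneg _ p) Bd) as [s [Hs Hsb]].
  pose proof (weighted_sum_lower hc Sl e 1 s HSl ltac:(lra) (onb_lower_frame_ineq e Ho)
                (onb_weighted_sum e s Ho Hs)).
  replace Sl with s by lra. auto.
Qed.

Lemma in_Sp_eigen_ONB : in_Sp p T -> exists Sl, infinite_sum (fun j => rpow (eigval T j) p) Sl /\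
  exists e, is_ONB e /\ infinite_sum (fun n => rpow (Re (hinner (T (e n)) (e n))) p) Sl.
Proof.
  intro HS. destruct (proj1 (in_Sp_eigval (proj1 HS)) HS) as [Sl HSl].
  exists Sl. split; auto. apply (eigen_ONB_sum (proj1 HS) Sl HSl).
Qed.

Lemma in_Sp_iff_ONB : in_Sp p T <->
  exists e : nat -> H, is_ONB e /\ lp_seq p (fun n => Re (hinner (T (e n)) (e n))).
Proof.
  split.
  - intro HS. destruct (in_Sp_eigen_ONB HS) as [Sl [_ [e [Ho He]]]].
    exists e. split; auto. apply lp_abs; [intro; apply diag_nonneg|]. exists Sl; auto.
  - intros [e [Ho Hlp]]. destruct (proj1 (lp_abs _ (fun n => diag_nonneg (e n))) Hlp) as [s Hs].
    apply (onb_summable_in_Sp e s Ho Hs).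
Qed.

Lemma in_Sp_iff_frame : in_Sp p T <->
  exists f : nat -> H, is_frame f /\ lp_seq p (fun n => Re (hinner (T (f n)) (f n))).
Proof.
  split.
  - intro HS. destruct (in_Sp_eigen_ONB HS) as [Sl [_ [e [Ho He]]]].
    exists e. split; [apply (onb_frames e Ho)|].
    apply lp_abs; [intro; apply diag_nonneg|]. exists Sl; auto.
  - intros [f [Hf Hlp]]. destruct (proj1 (lp_abs _ (fun n => diag_nonneg (f n))) Hlp) as [s Hs].
    apply (frame_summable_in_Sp f s Hf Hs).
Qed.

(* When T is in S_p, all three infima equal sum eigval^p and are attained by the
   eigenvector basis. *)
Lemma infima_in_Sp (hc : hcompact T) s : infinite_sum (fun j => rpow (eigval T j) p) s ->
  is_glb (onb_sums p T) s /\ is_glb (weighted_frame_sums p T) s /\ is_glb (parseval_sums p T) s.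
Proof.
  intro HSl. destruct (eigen_ONB_sum hc s HSl) as [e [Ho He]].
  destruct (onb_frames e Ho) as [Pe Le].
  split; [|split]; apply glb_of_min.
  - intros s' [e' [Ho' Hs']].
    pose proof (weighted_sum_lower hc s e' 1 s' HSl ltac:(lra) (onb_lower_frame_ineq e' Ho')
                  (onb_weighted_sum e' s' Ho' Hs')). lra.
  - exists e; auto.
  - intros s' [f [Hf Hs']].
    pose proof (weighted_sum_lower hc s f 1 s' HSl ltac:(lra) (lower_ge1_bound f Hf) Hs'). lra.
  - exists e. split; auto. apply onb_weighted_sum; auto.
  - intros s' [f [Hf Hs']]. destruct (parseval_weighted_sum f s' Hf Hs') as [W [HW HWs]].
    pose proof (weighted_sum_lower hc s f 1 W HSl ltac:(lra) (parseval_lower f Hf) HW). lra.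
  - exists e; auto.
Qed.

Lemma infima_not_in_Sp : ~ in_Sp p T ->
  inf_ext (onb_sums p T) None /\ inf_ext (weighted_frame_sums p T) None /\
  inf_ext (parseval_sums p T) None.
Proof.
  intro NS. split; [|split]; intros s' [f [Hf Hs']]; apply NS.
  - apply (onb_summable_in_Sp f s' Hf Hs').
  - apply (weighted_summable_in_Sp f 1 s'); [lra|apply lower_ge1_bound|]; auto.
  - apply (frame_summable_in_Sp f s' (proj1 Hf) Hs').
Qed.

End Assembly.

Theorem theorem16 (H : SepHilbert)
  (Hinfdim : exists e : nat -> H, orthonormal e)
  (p : R) (hp : 0 < p <= 1) (T : H -> H) (hT : positive_bounded_op T) :
  (in_Sp p T <->
     exists e : nat -> H, is_ONB e /\ lp_seq p (fun n => Re (hinner (T (e n)) (e n))))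
  /\
  (in_Sp p T <->
     exists f : nat -> H, is_frame f /\ lp_seq p (fun n => Re (hinner (T (f n)) (f n))))
  /\
  (forall v, schatten_pp p T v ->
     inf_ext (fun s => exists e : nat -> H, is_ONB e /\
                infinite_sum (fun n => rpow (Re (hinner (T (e n)) (e n))) p) s) v
     /\ inf_ext (fun s => exists f : nat -> H, frame_lower_ge1 f /\
                infinite_sum (fun n => weighted_term p T (f n)) s) v
     /\ inf_ext (fun s => exists f : nat -> H, parseval f /\
                infinite_sum (fun n => rpow (Re (hinner (T (f n)) (f n))) p) s) v).
Proof.
  destruct hT as [hl [hb hpos]].
  split; [exact (in_Sp_iff_ONB T hl hb hpos p hp Hinfdim)|].
  split; [exact (in_Sp_iff_frame T hl hb hpos p hp Hinfdim)|].
  intros v [[HS [lam [s [Hsv [Hs ->]]]]]|[NS ->]].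
  - (* the singular values are the eigenvalues, so sum eigval^p = s *)
    pose proof (proj1 HS) as hc.
    assert (HSl : infinite_sum (fun j => rpow (eigval T j) p) s).
    { eapply series_ext; [|exact Hs]. intro n; simpl.
      rewrite (singular_values_unique T hc hpos lam (conj hl (conj hb hpos)) Hsv n); auto. }
    exact (infima_in_Sp T hpos p hp Hinfdim hc s HSl).
  - exact (infima_not_in_Sp T hl hb hpos p hp NS).
Qed.
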